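(* Let $\mu\colon\mathbf 2\times\omega\to\omega$ be an injection. For every parsummable category $\mathcal C$ there is a (preferred) strong symmetric monoidal functor $\mu^*\mathcal C\to\Sigma(\mathcal C)$ which is an equivalence of underlying categories, and these functors are natural in morphisms of parsummable categories $\mathcal C\to\mathcal D$.
   Context: Let $\omega=\{1,2,\dots\}$, $\mathbf m=\{1,\dots,m\}$, $\mathcal M$ the monoid of injections $\omega\to\omega$, $E\mathcal M$ the category with objects $\mathcal M$ and unique morphisms between any two objects. A parsummable category is a small tame $E\mathcal M$-category $\mathcal C$ (strict $E\mathcal M$-action, $u_*$ the action of $u$, $[v,u]\colon u_*\Rightarrow v_*$ the isomorphism from $u\to v$; $\mathrm{supp}(X)$ the intersection of finite $A\subset\omega$ with $u_*X=X$ for all $u$ fixing $A$ pointwise; tame = all supports finite) with an object $0$ of empty support and a strictly unital, associative, commutative, $E\mathcal M$-equivariant functor $+$ on disjointly supported pairs; morphisms are strictly equivariant functors preserving $0$ and $+$. For a finite set $A$, injections $\phi,\phi'\colon A\times\omega\to\omega$ and $X_\bullet=(X_a)_{a\in A}$: $\phi_*(X_\bullet)=\sum_a\phi(a,-)_*(X_a)$, $[\phi',\phi]_{X_\bullet}=\sum_a[\phi'(a,-),\phi(a,-)]_{X_a}$. $\mu^*\mathcal C$ is the symmetric monoidal category with underlying category $\mathcal C$, tensor product $X\otimes Y=\mu_*(X,Y)$, unit $0$, left and right unit isomorphisms $[1,\mu(2,-)]_X$ and $[1,\mu(1,-)]_X$, symmetry $[\mu\circ(\pi\times\mathrm{id}),\mu]_{(X,Y)}$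 with $\pi\in\Sigma_2$ the transposition, and associator $[\mu\circ(1\amalg\mu),\mu\circ(\mu\amalg1)]_{(X,Y,Z)}$, where $(1\amalg\mu)\colon\mathbf 3\times\omega\to\mathbf 2\times\omega$ is $(1,x)\mapsto(1,x)$, $(i,x)\mapsto(2,\mu(i-1,x))$ for $i\ge2$, and $\mu\amalg1$ is defined analogously; morphisms of parsummable categories are strict symmetric monoidal functors $\mu^*\mathcal C\to\mu^*\mathcal D$. $\Sigma(\mathcal C)$ is the permutative category whose objects are finite sequences $(X_1,\dots,X_m)$ of objects of $\mathcal C$, morphisms $(X_1,\dots,X_m)\to(Y_1,\dots,Y_n)$ are classes $[\psi,f,\phi]$ ($\phi\colon\mathbf m\times\omega\to\omega$, $\psi\colon\mathbf n\times\omega\to\omega$ injections, $f\colon\phi_*(X_\bullet)\to\psi_*(Y_\bullet)$) modulo $(\psi,f,\phi)\sim(\psi',[\psi',\psi]f[\phi,\phi'],\phi')$, composition $[\rho,g,\theta][\psi,f,\phi]=[\rho,g[\theta,\psi]f,\phi]$, tensor product concatenation on objects and $[\psi,f,\phi]\otimes[\rho,g,\theta]=[\psi+\rho,f+g,\phi+\theta]$ for representatives with disjoint images ($(\phi+\theta)(i,x)=\phi(i,x)$ for $i\le m$, $\theta(i-m,x)$ otherwise), symmetry $[\bar\phi,\mathrm{id},\phi]$ with $\bar\phi(i,x)=\phi(i+m,x)$ for $i\le n$ and $\phi(i-n,x)$ otherwise; $\Sigma(F)$ applies $F$ entrywise and sends $[\psi,f,\phi]$ to $[\psi,Ff,\phi]$.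 *)

From Stdlib Require Import ClassicalEpsilon Relations.Relation_Operators.
From HB Require Import structures.
From mathcomp Require Import all_boot.

Set Implicit Arguments.
Unset Strict Implicit.
Unset Printing Implicit Defensive.

(* omega is modelled by nat (0-based relabelling of {1,2,...}).        *)
Record inj := Inj { injf :> nat -> nat; injfP : injective injf }.

Definition inj1 : inj := @Inj id (fun x y (e : id x = id y) => e).
Definition injM (u v : inj) : inj :=
  @Inj (u \o v) (ssrfun.inj_comp (@injfP u) (@injfP v)).

(* Raw data of a (small) EM-category with 0 and partial sum.           *)
(* (pcomp g f = g o f, meaningful when pcod f = pdom g).                *)
(* pactm v u f is the image of the morphism (u -> v, f) of EM x C under *)
(* the action functor EM x C -> C; thus u_* f = pactm u u f and          *)
(* [v,u]_X = pactm v u (pid X).                                         *)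
(* pplus / pplusm are only meaningful on disjointly supported pairs.    *)
Record PData := {
  pOb : Type;
  pMor : Type;
  pdom : pMor -> pOb;
  pcod : pMor -> pOb;
  pid : pOb -> pMor;
  pcomp : pMor -> pMor -> pMor;
  pact : inj -> pOb -> pOb;
  pactm : inj -> inj -> pMor -> pMor;
  pzero : pOb;
  pplus : pOb -> pOb -> pOb;
  pplusm : pMor -> pMor -> pMor }.

Arguments pdom {p} _.
Arguments pcod {p} _.
Arguments pid {p} _.
Arguments pcomp {p} _ _.
Arguments pact {p} _ _.
Arguments pactm {p} _ _ _.
Arguments pzero p.
Arguments pplus {p} _ _.
Arguments pplusm {p} _ _.

Definition fixes (A : seq nat) (u : inj) := forall a, a \in A -> u a = a.
Definition supports (C : PData) (A : seq nat) (X : pOb C) :=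
  forall u, fixes A u -> pact u X = X.
Definition supp (C : PData) (X : pOb C) (n : nat) :=
  forall A : seq nat, supports A X -> n \in A.
Definition disj (C : PData) (X Y : pOb C) :=
  forall n, supp X n -> supp Y n -> False.
Definition disjm (C : PData) (f g : pMor C) :=
  disj (pdom f) (pdom g) /\ disj (pcod f) (pcod g).

Record PAxioms (C : PData) : Prop := {
  ax_dom_id : forall X : pOb C, pdom (pid X) = X;
  ax_cod_id : forall X : pOb C, pcod (pid X) = X;
  ax_dom_comp : forall f g : pMor C, pcod f = pdom g -> pdom (pcomp g f) = pdom f;
  ax_cod_comp : forall f g : pMor C, pcod f = pdom g -> pcod (pcomp g f) = pcod g;
  ax_idl : forall f : pMor C, pcomp (pid (pcod f)) f = f;
  ax_idr : forall f : pMor C, pcomp f (pid (pdom f)) = f;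
  ax_assoc : forall f g h : pMor C, pcod f = pdom g -> pcod g = pdom h ->
     pcomp h (pcomp g f) = pcomp (pcomp h g) f;
  ax_act_dom : forall v u (f : pMor C), pdom (pactm v u f) = pact u (pdom f);
  ax_act_cod : forall v u (f : pMor C), pcod (pactm v u f) = pact v (pcod f);
  ax_act_id : forall u (X : pOb C), pactm u u (pid X) = pid (pact u X);
  ax_act_comp : forall w v u (f g : pMor C), pcod f = pdom g ->
     pcomp (pactm w v g) (pactm v u f) = pactm w u (pcomp g f);
  ax_act_unit_ob : forall X : pOb C, pact inj1 X = X;
  ax_act_unit_mor : forall f : pMor C, pactm inj1 inj1 f = f;
  ax_act_mul_ob : forall v v' (X : pOb C), pact (injM v v') X = pact v (pact v' X);
  ax_act_mul_mor : forall v v' u u' (f : pMor C),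
     pactm (injM v v') (injM u u') f = pactm v u (pactm v' u' f);
  ax_tame : forall X : pOb C, exists A : seq nat, forall n, supp X n -> n \in A;
  ax_zero_supp : forall n, ~ supp (pzero C) n;
  ax_plus_dom : forall f g : pMor C, disjm f g ->
     pdom (pplusm f g) = pplus (pdom f) (pdom g);
  ax_plus_cod : forall f g : pMor C, disjm f g ->
     pcod (pplusm f g) = pplus (pcod f) (pcod g);
  ax_plus_id : forall X Y : pOb C, disj X Y -> pplusm (pid X) (pid Y) = pid (pplus X Y);
  ax_plus_comp : forall f f' g g' : pMor C, disjm f f' -> disjm g g' ->
     pcod f = pdom g -> pcod f' = pdom g' ->
     pplusm (pcomp g f) (pcomp g' f') = pcomp (pplusm g g') (pplusm f f');
  ax_unitl_ob : forall X : pOb C, pplus (pzero C) X = X;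
  ax_unitr_ob : forall X : pOb C, pplus X (pzero C) = X;
  ax_unitl_mor : forall f : pMor C, pplusm (pid (pzero C)) f = f;
  ax_unitr_mor : forall f : pMor C, pplusm f (pid (pzero C)) = f;
  ax_assoc_ob : forall X Y Z : pOb C, disj X Y -> disj X Z -> disj Y Z ->
     pplus (pplus X Y) Z = pplus X (pplus Y Z);
  ax_assoc_mor : forall f g h : pMor C, disjm f g -> disjm f h -> disjm g h ->
     pplusm (pplusm f g) h = pplusm f (pplusm g h);
  ax_comm_ob : forall X Y : pOb C, disj X Y -> pplus X Y = pplus Y X;
  ax_comm_mor : forall f g : pMor C, disjm f g -> pplusm f g = pplusm g f;
  ax_equiv_ob : forall u (X Y : pOb C), disj X Y ->
     pact u (pplus X Y) = pplus (pact u X) (pact u Y);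
  ax_equiv_mor : forall v u (f g : pMor C), disjm f g ->
     pactm v u (pplusm f g) = pplusm (pactm v u f) (pactm v u g) }.

Record PCat := { pdata :> PData; pax : PAxioms pdata }.

Record PMorAx (C D : PData) (Fo : pOb C -> pOb D) (Fm : pMor C -> pMor D) : Prop := {
  fax_dom : forall f, pdom (Fm f) = Fo (pdom f);
  fax_cod : forall f, pcod (Fm f) = Fo (pcod f);
  fax_id : forall X, Fm (pid X) = pid (Fo X);
  fax_comp : forall f g, pcod f = pdom g -> Fm (pcomp g f) = pcomp (Fm g) (Fm f);
  fax_act_ob : forall u X, Fo (pact u X) = pact u (Fo X);
  fax_act_mor : forall v u f, Fm (pactm v u f) = pactm v u (Fm f);
  fax_zero : Fo (pzero C) = pzero D;
  fax_plus_ob : forall X Y, disj X Y -> Fo (pplus X Y) = pplus (Fo X) (Fo Y);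
  fax_plus_mor : forall f g, disjm f g -> Fm (pplusm f g) = pplusm (Fm f) (Fm g) }.

Record PMor (C D : PCat) := {
  Fo : pOb C -> pOb D;
  Fm : pMor C -> pMor D;
  Fax : PMorAx Fo Fm }.

(* phi_*(X_.) and [phi',phi]_{X_.} for a family of injections given by  *)
(* its sections ps a = phi(a,-), indexed by the positions a < size Xs.   *)
Definition push (C : PData) (ps : nat -> inj) (Xs : seq (pOb C)) : pOb C :=
  \big[@pplus C / pzero C]_(a < size Xs) pact (ps a) (nth (pzero C) Xs a).

Definition pushm (C : PData) (ps : nat -> inj) (fs : seq (pMor C)) : pMor C :=
  \big[@pplusm C / pid (pzero C)]_(a < size fs)
     pactm (ps a) (ps a) (nth (pid (pzero C)) fs a).

(* [ps, qs]_{Xs} : push qs Xs -> push ps Xs *)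
Definition swp (C : PData) (ps qs : nat -> inj) (Xs : seq (pOb C)) : pMor C :=
  \big[@pplusm C / pid (pzero C)]_(a < size Xs)
     pactm (ps a) (qs a) (pid (nth (pzero C) Xs a)).

(* a family of injections phi : m x omega -> omega, given by sections,  *)
(* is jointly injective (each section being injective by construction) *)
Definition jinj (m : nat) (ps : nat -> inj) :=
  forall a b x y, a < m -> b < m -> ps a x = ps b y -> a = b.

Definition fam (us : seq inj) : nat -> inj := fun a => nth inj1 us a.

(* Data of a symmetric monoidal category (morphisms up to smheq).       *)
Record SMCat := {
  smOb : Type;
  smMor : Type;
  smdom : smMor -> smOb;
  smcod : smMor -> smOb;
  smid : smOb -> smMor;
  smcomp : smMor -> smMor -> smMor;
  smheq : smMor -> smMor -> Prop;
  smtens : smOb -> smOb -> smOb;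
  smtensm : smMor -> smMor -> smMor;
  smunit : smOb;
  smlam : smOb -> smMor;   (* unit ⊗ X -> X *)
  smrho : smOb -> smMor;   (* X ⊗ unit -> X *)
  smalpha : smOb -> smOb -> smOb -> smMor; (* (X⊗Y)⊗Z -> X⊗(Y⊗Z) *)
  smbeta : smOb -> smOb -> smMor }.        (* X⊗Y -> Y⊗X *)

Arguments smdom {s} _.
Arguments smcod {s} _.
Arguments smid {s} _.
Arguments smcomp {s} _ _.
Arguments smheq {s} _ _.
Arguments smtens {s} _ _.
Arguments smtensm {s} _ _.
Arguments smunit s.
Arguments smlam {s} _.
Arguments smrho {s} _.
Arguments smalpha {s} _ _ _.
Arguments smbeta {s} _ _.

Definition ishom (S : SMCat) (f : smMor S) (X Y : smOb S) :=
  smdom f = X /\ smcod f = Y.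

Definition isiso (S : SMCat) (f : smMor S) :=
  exists g : smMor S, ishom g (smcod f) (smdom f) /\
    smheq (smcomp g f) (smid (smdom f)) /\ smheq (smcomp f g) (smid (smcod f)).

Definition musec (mu : 'I_2 * nat -> nat) (Hmu : injective mu) (i : 'I_2) : inj :=
  @Inj (fun x => mu (i, x))
       (fun x y (e : mu (i, x) = mu (i, y)) => f_equal snd (Hmu _ _ e)).

Definition mu_star (mu : 'I_2 * nat -> nat) (Hmu : injective mu) (C : PCat) : SMCat :=
  let m1 := musec Hmu ord0 in
  let m2 := musec Hmu ord_max in
  {| smOb := pOb C;
     smMor := pMor C;
     smdom := @pdom C;
     smcod := @pcod C;
     smid := @pid C;
     smcomp := @pcomp C;
     smheq := @eq (pMor C);
     smtens := fun X Y => push (fam [:: m1; m2]) [:: X; Y];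
     smtensm := fun f g => pushm (fam [:: m1; m2]) [:: f; g];
     smunit := pzero C;
     smlam := fun X => pactm inj1 m2 (pid X);
     smrho := fun X => pactm inj1 m1 (pid X);
     smalpha := fun X Y Z =>
        swp (fam [:: m1; injM m2 m1; injM m2 m2])
            (fam [:: injM m1 m1; injM m1 m2; m2]) [:: X; Y; Z];
     smbeta := fun X Y => swp (fam [:: m2; m1]) (fam [:: m1; m2]) [:: X; Y] |}.

(* Sigma(C).  A morphism is a representative (psi, f, phi) together     *)
(* with its source and target sequences; morphisms are compared modulo  *)
(* the equivalence relation generated by ~.                             *)
Record SigMor (C : PData) := {
  s_src : seq (pOb C);
  s_tgt : seq (pOb C);
  s_phi : nat -> inj;
  s_psi : nat -> inj;
  s_f : pMor C;
  s_phiP : jinj (size s_src) s_phi;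
  s_psiP : jinj (size s_tgt) s_psi;
  s_dom : pdom s_f = push s_phi s_src;
  s_cod : pcod s_f = push s_psi s_tgt }.

Definition sig_junk (C : PCat) : SigMor C.
Proof.
refine (@Build_SigMor C [::] [::] (fun _ => inj1) (fun _ => inj1) (pid (pzero C))
          _ _ _ _).
- by move=> a b x y.
- by move=> a b x y.
- by rewrite /push big_ord0 (ax_dom_id (pax C)).
- by rewrite /push big_ord0 (ax_cod_id (pax C)).
Defined.

(* builds [psi, f, phi] when this is a legitimate representative; the   *)
(* fallback branch is never used for the constructions below (they      *)
(* always produce legitimate representatives), it only avoids having to *)
(* prove this inside the definitions.                                   *)
Definition mkSig (C : PCat) (src tgt : seq (pOb C)) (phi psi : nat -> inj)
    (f : pMor C) : SigMor C :=
  match excluded_middle_informative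
     (jinj (size src) phi /\ jinj (size tgt) psi /\
      pdom f = push phi src /\ pcod f = push psi tgt) with
  | left (conj h1 (conj h2 (conj h3 h4))) =>
      @Build_SigMor C src tgt phi psi f h1 h2 h3 h4
  | right _ => sig_junk C
  end.

Definition sig_rel (C : PData) (m m' : SigMor C) :=
  s_src m = s_src m' /\ s_tgt m = s_tgt m' /\
  s_f m' = pcomp (swp (s_psi m') (s_psi m) (s_tgt m))
                 (pcomp (s_f m) (swp (s_phi m) (s_phi m') (s_src m))).

Definition canon (m : nat) (a : nat) : inj.
Proof.
refine (@Inj (fun x => x * m.+1 + a) _).
by move=> x y /addIn /eqP; rewrite eqn_pmul2r // => /eqP.
Defined.

Definition evn (u : inj) : inj.
Proof.
refine (@Inj (fun x => (u x).*2) _).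
by move=> x y /double_inj /injfP.
Defined.

Definition odn (u : inj) : inj.
Proof.
refine (@Inj (fun x => (u x).*2.+1) _).
by move=> x y [] /double_inj /injfP.
Defined.

Definition catf (m : nat) (ps qs : nat -> inj) : nat -> inj :=
  fun a => if a < m then ps a else qs (a - m).

Definition sig_id (C : PCat) (Xs : seq (pOb C)) : SigMor C :=
  mkSig Xs Xs (canon (size Xs)) (canon (size Xs)) (pid (push (canon (size Xs)) Xs)).

Definition sig_comp (C : PCat) (g f : SigMor C) : SigMor C :=
  mkSig (s_src f) (s_tgt g) (s_phi f) (s_psi g)
    (pcomp (s_f g) (pcomp (swp (s_phi g) (s_psi f) (s_tgt f)) (s_f f))).

(* tensor product: first pass to representatives with disjoint images  *)
(* (even / odd values), then take [psi+rho, f+g, phi+theta]             *)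
Definition sig_tensm (C : PCat) (m1 m2 : SigMor C) : SigMor C :=
  let phi1 := fun a => evn (s_phi m1 a) in
  let psi1 := fun a => evn (s_psi m1 a) in
  let phi2 := fun a => odn (s_phi m2 a) in
  let psi2 := fun a => odn (s_psi m2 a) in
  let f1 := pcomp (swp psi1 (s_psi m1) (s_tgt m1))
                  (pcomp (s_f m1) (swp (s_phi m1) phi1 (s_src m1))) in
  let f2 := pcomp (swp psi2 (s_psi m2) (s_tgt m2))
                  (pcomp (s_f m2) (swp (s_phi m2) phi2 (s_src m2))) in
  mkSig (s_src m1 ++ s_src m2) (s_tgt m1 ++ s_tgt m2)
        (catf (size (s_src m1)) phi1 phi2) (catf (size (s_tgt m1)) psi1 psi2)
        (pplusm f1 f2).

Definition sig_beta (C : PCat) (Xs Ys : seq (pOb C)) : SigMor C :=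
  let m := size Xs in
  let n := size Ys in
  let phi := canon (m + n) in
  let phibar := fun a => if a < n then phi (a + m) else phi (a - n) in
  mkSig (Xs ++ Ys) (Ys ++ Xs) phi phibar (pid (push phi (Xs ++ Ys))).

Definition Sigma (C : PCat) : SMCat :=
  {| smOb := seq (pOb C);
     smMor := SigMor C;
     smdom := @s_src C;
     smcod := @s_tgt C;
     smid := @sig_id C;
     smcomp := @sig_comp C;
     smheq := clos_refl_sym_trans _ (@sig_rel C);
     smtens := fun Xs Ys => Xs ++ Ys;
     smtensm := @sig_tensm C;
     smunit := [::];
     smlam := @sig_id C;
     smrho := @sig_id C;
     smalpha := fun Xs Ys Zs => sig_id (Xs ++ Ys ++ Zs);
     smbeta := @sig_beta C |}.

Record SMFun (A B : SMCat) := {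
  fo : smOb A -> smOb B;
  fm : smMor A -> smMor B;
  fmu : smOb A -> smOb A -> smMor B;  (* F X ⊗ F Y -> F (X ⊗ Y) *)
  feps : smMor B }.                   (* unit -> F unit *)

Definition is_functor (A B : SMCat) (Fo : smOb A -> smOb B) (Fm : smMor A -> smMor B) :=
  [/\ forall f, smdom (Fm f) = Fo (smdom f) /\ smcod (Fm f) = Fo (smcod f),
      forall f g, smheq f g -> smheq (Fm f) (Fm g),
      forall X, smheq (Fm (smid X)) (smid (Fo X)) &
      forall f g, smcod f = smdom g -> smheq (Fm (smcomp g f)) (smcomp (Fm g) (Fm f))].

Record strong_sym_monoidal (A B : SMCat) (F : SMFun A B) : Prop := {
  ssm_functor : is_functor (fo F) (fm F);
  ssm_mu_hom : forall X Y, ishom (fmu F X Y) (smtens (fo F X) (fo F Y)) (fo F (smtens X Y));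
  ssm_mu_iso : forall X Y, isiso (fmu F X Y);
  ssm_eps_hom : ishom (feps F) (smunit B) (fo F (smunit A));
  ssm_eps_iso : isiso (feps F);
  ssm_mu_nat : forall f g,
     smheq (smcomp (fm F (smtensm f g)) (fmu F (smdom f) (smdom g)))
           (smcomp (fmu F (smcod f) (smcod g)) (smtensm (fm F f) (fm F g)));
  ssm_assoc : forall X Y Z,
     smheq (smcomp (fm F (smalpha X Y Z))
              (smcomp (fmu F (smtens X Y) Z) (smtensm (fmu F X Y) (smid (fo F Z)))))
           (smcomp (fmu F X (smtens Y Z))
              (smcomp (smtensm (smid (fo F X)) (fmu F Y Z))
                      (smalpha (fo F X) (fo F Y) (fo F Z))));
  ssm_unitl : forall X,
     smheq (smlam (fo F X))
           (smcomp (fm F (smlam X))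
              (smcomp (fmu F (smunit A) X) (smtensm (feps F) (smid (fo F X)))));
  ssm_unitr : forall X,
     smheq (smrho (fo F X))
           (smcomp (fm F (smrho X))
              (smcomp (fmu F X (smunit A)) (smtensm (smid (fo F X)) (feps F))));
  ssm_sym : forall X Y,
     smheq (smcomp (fm F (smbeta X Y)) (fmu F X Y))
           (smcomp (fmu F Y X) (smbeta (fo F X) (fo F Y))) }.

Definition nat_iso (A B : SMCat) (Fo Go : smOb A -> smOb B)
    (Fm Gm : smMor A -> smMor B) (eta : smOb A -> smMor B) :=
  (forall X, ishom (eta X) (Fo X) (Go X) /\ isiso (eta X)) /\
  (forall f, smheq (smcomp (Gm f) (eta (smdom f))) (smcomp (eta (smcod f)) (Fm f))).

Definition cat_equivalence (A B : SMCat) (F : SMFun A B) :=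
  exists (Go : smOb B -> smOb A) (Gm : smMor B -> smMor A)
         (eta : smOb A -> smMor A) (eps : smOb B -> smMor B),
    [/\ is_functor Go Gm,
        nat_iso id (fun X => Go (fo F X)) id (fun f => Gm (fm F f)) eta &
        nat_iso (fun Y => fo F (Go Y)) id (fun f => fm F (Gm f)) id eps].

Definition smf_comp (A B C : SMCat) (G : SMFun B C) (F : SMFun A B) : SMFun A C :=
  {| fo := fun X => fo G (fo F X);
     fm := fun f => fm G (fm F f);
     fmu := fun X Y => smcomp (fm G (fmu F X Y)) (fmu G (fo F X) (fo F Y));
     feps := smcomp (fm G (feps F)) (feps G) |}.

Definition smf_eq (A B : SMCat) (F G : SMFun A B) :=
  [/\ forall X, fo F X = fo G X,
      forall f, smheq (fm F f) (fm G f),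
      forall X Y, smheq (fmu F X Y) (fmu G X Y) &
      smheq (feps F) (feps G)].

Definition mu_star_fun (mu : 'I_2 * nat -> nat) (Hmu : injective mu)
    (C D : PCat) (F : PMor C D) : SMFun (mu_star Hmu C) (mu_star Hmu D) :=
  {| fo := (Fo F : smOb (mu_star Hmu C) -> smOb (mu_star Hmu D));
     fm := (Fm F : smMor (mu_star Hmu C) -> smMor (mu_star Hmu D));
     fmu := fun X Y => @smid (mu_star Hmu D) (@smtens (mu_star Hmu D) (Fo F X) (Fo F Y));
     feps := pid (pzero D) |}.

Definition SigmaF (C D : PCat) (F : PMor C D) (m : SigMor C) : SigMor D :=
  mkSig (map (Fo F) (s_src m)) (map (Fo F) (s_tgt m)) (s_phi m) (s_psi m)
        (Fm F (s_f m)).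

Definition Sigma_fun (C D : PCat) (F : PMor C D) : SMFun (Sigma C) (Sigma D) :=
  {| fo := (map (Fo F) : smOb (Sigma C) -> smOb (Sigma D));
     fm := (@SigmaF C D F : smMor (Sigma C) -> smMor (Sigma D));
     fmu := fun (Xs Ys : seq (pOb C)) => sig_id (map (Fo F) Xs ++ map (Fo F) Ys);
     feps := sig_id [::] |}.

(* Let [flat (X_1, ..., X_m)] be the sum of the [X_i] moved apart by a fixed standard
   family of injections [std m], and let [flatm [psi, f, phi]] be [f] conjugated by the
   canonical isomorphisms [[std, psi]] and [[phi, std]].  As [[w,v] [v,u] = [w,u]], two
   representatives are equivalent exactly when they have the same flattening, so [flatm]
   identifies the hom-sets of Sigma(C) with those of C and every equation in Sigma(C) can
   be checked after flattening.  The functor Phi, [X |-> (X)] and [f |-> [id, f, id]],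
   satisfies [flat (Phi X) = X] and [flatm (Phi f) = f], so [flat] is a quasi-inverse;
   every coherence diagram for Phi flattens to an identity between sums of maps [[v,u]_X]
   in C, which follows from the functoriality of [+] on disjointly supported pairs.
   Disjointness is where tameness enters: [u_* X] depends only on the restriction of [u]
   to a finite support of [X], hence is supported in the image of [u]. *)

From HB Require Import structures.
From mathcomp Require Import all_boot zify.
From Stdlib Require Import ClassicalEpsilon Classical FunctionalExtensionality ProofIrrelevance.
From Stdlib Require Import Relations.Relation_Operators.

Set Implicit Arguments.
Unset Strict Implicit.
Unset Printing Implicit Defensive.

(** * Supports *)

Lemma inj_ext (u v : inj) : u =1 v -> u = v.
Proof.
case: u v => f hf [g hg] /= /functional_extensionality e; subst g.
by rewrite (proof_irrelevance _ hf hg).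
Qed.

Lemma inj1M (u : inj) : injM inj1 u = u.
Proof. exact: inj_ext. Qed.

Definition bound (A : seq nat) := (\max_(a <- A) a).+1.

Lemma bound_gt (A : seq nat) (a : nat) : a \in A -> a < bound A.
Proof. by move=> aA; rewrite ltnS (@leq_bigmax_seq _ _ predT id). Qed.

Lemma inj_eventually_ge (u : inj) M : exists K, forall x, K <= x -> M <= u x.
Proof.
elim: M => [|M [K hK]]; first by exists 0.
case: (classic (exists x, u x = M)) => [[x0 ux0]|hM].
  exists (maxn K x0.+1) => x hx; have := hK x; have := @injfP u x x0.
  rewrite ux0; lia.
exists K => x /hK; have : u x <> M by move=> e; apply: hM; exists x.
lia.
Qed.

Section Glue.
Variables (A : seq nat) (u : inj).

Definition offset := bound A + bound (map u A).

Lemma offset_gt (a : nat) : a \in A -> a < offset /\ u a < offset.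
Proof.
move=> aA; have h : u a < bound (map u A) := bound_gt (map_f u aA).
by have := bound_gt aA; rewrite /offset; lia.
Qed.

Definition glue (k : nat) : inj.
Proof.
refine (@Inj (fun x => if x \in A then u x else x + offset + k) _).
move=> x y /=; case: ifP => xA; case: ifP => yA.
- exact: injfP.
- by have := offset_gt xA; lia.
- by have := offset_gt yA; lia.
- lia.
Defined.

Lemma glue_in k x : x \in A -> glue k x = u x.
Proof. by rewrite /glue /= => ->. Qed.

Lemma glue_out k x : x \notin A -> glue k x = x + offset + k.
Proof. by rewrite /glue /= => /negbTE ->. Qed.

End Glue.

Arguments glue : simpl never.

Lemma eq_glue (A : seq nat) (u u' : inj) k : {in A, u =1 u'} -> glue A u k = glue A u' k.
Proof.
move=> uu'; have eqA : map u A = map u' A by apply/eq_in_map.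
by apply: inj_ext => x; rewrite /glue /= /offset eqA; case: ifP => // /uu'.
Qed.

Lemma glue_id_on (A B : seq nat) (u : inj) :
  {in A & B, forall a b, (u a == b) = (a == b)} ->
  exists w : inj, {in A, w =1 u} /\ {in B, w =1 id}.
Proof.
move=> uAB; set K := bound (map u A ++ B).
have bK x : x \in map u A ++ B -> x < K by apply: bound_gt.
have uK a : a \in A -> u a < K by move=> aA; apply: bK; rewrite mem_cat map_f.
have BK b : b \in B -> b < K by move=> bB; apply: bK; rewrite mem_cat bB orbT.
pose w x := if x \in A then u x else if x \in B then x else x + K.
have w_inj : injective w.
  move=> x y; rewrite /w; case xA: (x \in A); case yA: (y \in A).
  - exact: injfP.
  - case: ifP => yB e; last by have := uK x xA; lia.
    by move: (uAB x y xA yB); rewrite e eqxx => /esym/eqP exy; move: xA; rewrite exy yA.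
  - case: ifP => xB e; last by have := uK y yA; lia.
    by move: (uAB y x yA xB); rewrite -e eqxx => /esym/eqP eyx; move: xA; rewrite -eyx yA.
  - by case: ifP => xB; case: ifP => yB; do ?[lia | have := BK x xB | have := BK y yB].
exists (Inj w_inj); split=> [a aA | b bB] /=; rewrite /w ?aA // bB.
by case: ifP => // bA; apply/eqP; rewrite uAB.
Qed.

Section Supports.
Variable C : PCat.
Let ax := pax C.

Lemma act_mul (u v : inj) (X : pOb C) : pact u (pact v X) = pact (injM u v) X.
Proof. by rewrite (ax_act_mul_ob ax). Qed.

(* [u \o s = glue A u 0 \o t] for two injections [s], [t] fixing [A] pointwise. *)
Lemma act_glue A (X : pOb C) (u : inj) : supports A X -> pact u X = pact (glue A u 0) X.
Proof.
move=> sA; set p := glue A u 0.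
have [K hK] := inj_eventually_ge u (offset A u + bound A).
pose s := glue A inj1 K.
have s_out x : x \notin A -> offset A u + bound A <= u (s x).
  by move=> xA; apply: hK; rewrite glue_out //; lia.
pose t x := if x \in A then x else u (s x) - offset A u.
have t_inj : injective t.
  move=> x y; rewrite /t; case: ifP => xA; case: ifP => yA //.
  - by have := bound_gt xA; have := s_out y (negbT yA); lia.
  - by have := bound_gt yA; have := s_out x (negbT xA); lia.
  - have := s_out x (negbT xA); have := s_out y (negbT yA) => hy hx e.
    by apply: (@injfP s); apply: (@injfP u); lia.
have fixed (v : inj) : {in A, v =1 id} -> pact v X = X by move=> vA; apply: sA.
have sX : pact s X = X by apply: fixed => a aA; rewrite glue_in.
have tX : pact (Inj t_inj) X = X by apply: fixed => a aA; rewrite /= /t aA.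
have ps : injM u s = injM p (Inj t_inj).
  apply: inj_ext => x; change (u (s x) = p (t x)); rewrite /t.
  case: (boolP (x \in A)) => xA; first by rewrite !glue_in.
  have tA : u (s x) - offset A u \notin A.
    by apply/negP => /bound_gt; have := s_out x xA; lia.
  by rewrite /p glue_out //; have := s_out x xA; lia.
by rewrite -{1}sX act_mul ps -act_mul tX.
Qed.

Lemma eq_act_supports A (X : pOb C) (u u' : inj) : supports A X -> {in A, u =1 u'} ->
  pact u X = pact u' X.
Proof. by move=> sA uu'; rewrite (act_glue u sA) (act_glue u' sA) (eq_glue _ uu'). Qed.

Lemma supports_act A (X : pOb C) (u : inj) : supports A X -> supports (map u A) (pact u X).
Proof.
move=> sA v vA; rewrite act_mul; apply: (eq_act_supports sA) => a aA /=.
by rewrite vA ?map_f.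
Qed.

Lemma exists_supports (X : pOb C) : exists A, supports A X.
Proof.
have [B hB] := ax_tame ax X; apply: NNPP => none.
have : supp X (bound B) by move=> A sA; case: none; exists A.
by move/hB/bound_gt; rewrite ltnn.
Qed.

(* Moving [B] off [u A] by an injection fixing [A], [u] and the identity on the moved
   copy of [B] glue to a single injection. *)
Lemma supportsI A B (X : pOb C) :
  supports A X -> supports B X -> supports [seq a <- A | a \in B] X.
Proof.
move=> sA sB u uAB.
pose s := glue A inj1 (bound (map u A)).
have sX : pact s X = X by apply: sA => a aA; rewrite glue_in.
have sB' : supports (map s B) X by rewrite -sX; apply: supports_act.
have [w [wu wB]] : exists w : inj, {in A, w =1 u} /\ {in map s B, w =1 id}.
  apply: glue_id_on => a _ aA /mapP [b bB ->].
  case: (boolP (b \in A)) => bA.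
    by rewrite glue_in // -{1}(uAB b) ?mem_filter ?bA ?bB // (inj_eq (@injfP u)).
  have h1 : u a < bound (map u A) := bound_gt (map_f u aA).
  have [h2 _] := offset_gt inj1 aA.
  by rewrite glue_out // !ltn_eqF //; lia.
rewrite (eq_act_supports sA (u' := w)) => [|a /wu //].
by apply: sB' => b /wB.
Qed.

Lemma not_supp (X : pOb C) n : ~ supp X n -> exists A, supports A X /\ n \notin A.
Proof.
move=> /not_all_ex_not [A nA]; exists A.
by have [sA /negP nA'] := imply_to_and _ _ nA.
Qed.

Lemma supports_nil0 : supports [::] (pzero C).
Proof.
have [A sA] := exists_supports (pzero C).
elim: {A}(size A) {-2}A (leqnn (size A)) sA => [|n IH] A.
  by rewrite leqn0 => /nilP ->.
case: A => [_ //|a A] /= lesA sA.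
have [B [sB aB]] := not_supp (ax_zero_supp ax (n := a)).
have := supportsI sA sB; rewrite /= (negbTE aB) => sAB.
by apply: IH sAB; rewrite size_filter (leq_trans (count_size _ _)).
Qed.

Lemma act0 (u : inj) : pact u (pzero C) = pzero C.
Proof. exact: supports_nil0. Qed.

End Supports.

Section Disjointness.
Variable C : PCat.
Let ax := pax C.

Definition supported_in (X : pOb C) (S : nat -> Prop) :=
  exists A, supports A X /\ forall n, n \in A -> S n.

Lemma disj_supported_in X Y S T : supported_in X S -> supported_in Y T ->
  (forall n, S n -> T n -> False) -> disj X Y.
Proof.
move=> [A [sA AS]] [B [sB BT]] ST n XA YB.
exact: ST n (AS _ (XA _ sA)) (BT _ (YB _ sB)).
Qed.

Lemma supported_in_act X (u : inj) (S : nat -> Prop) : (forall x, S (u x)) ->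
  supported_in (pact u X) S.
Proof.
move=> uS; have [A sA] := exists_supports X.
by exists (map u A); split=> [|n /mapP [x _ ->]]; [apply: supports_act|].
Qed.

Lemma supported_in_range X (u : inj) : supported_in (pact u X) (fun k => exists x, k = u x).
Proof. by apply: supported_in_act => x; exists x. Qed.

Lemma supported_in_plus X Y (S : nat -> Prop) : disj X Y ->
  supported_in X S -> supported_in Y S -> supported_in (pplus X Y) S.
Proof.
move=> dXY [A [sA AS]] [B [sB BS]]; exists (A ++ B); split.
  move=> u uAB; rewrite (ax_equiv_ob ax _ dXY) sA ?sB // => b b_in; apply: uAB;
  by rewrite mem_cat b_in ?orbT.
by move=> n; rewrite mem_cat => /orP [] ?; auto.
Qed.

Lemma supported_in0 S : supported_in (pzero C) S.
Proof. by exists [::]; split; first exact: supports_nil0. Qed.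

Lemma sub_supported_in X (S T : nat -> Prop) : (forall n, S n -> T n) ->
  supported_in X S -> supported_in X T.
Proof. by move=> ST [A [sA AS]]; exists A; split; auto. Qed.

Lemma disj_sym (X Y : pOb C) : disj X Y -> disj Y X.
Proof. by move=> dXY n nY nX; apply: (dXY n). Qed.

Lemma disjX0 (X : pOb C) : disj X (pzero C).
Proof. by move=> n _ /(ax_zero_supp ax). Qed.

Lemma disj_act (u v : inj) (X Y : pOb C) : (forall x y, u x <> v y) ->
  disj (pact u X) (pact v Y).
Proof.
move=> uv; apply: disj_supported_in (supported_in_range _ _) (supported_in_range _ _) _.
by move=> k [x ->] [y /uv].
Qed.

Lemma supp_plus (X Y : pOb C) n : disj X Y -> supp (pplus X Y) n -> supp X n \/ supp Y n.
Proof.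
move=> dXY nXY; apply: NNPP => /not_or_and [nX nY].
have [A [sA nA]] := not_supp nX.
have [B [sB nB]] := not_supp nY.
have : n \in A ++ B.
  apply: nXY => u uAB; rewrite (ax_equiv_ob ax _ dXY) sA ?sB // => b b_in; apply: uAB;
  by rewrite mem_cat b_in ?orbT.
by rewrite mem_cat (negbTE nA) (negbTE nB).
Qed.

Lemma disj_plusl (X Y Z : pOb C) : disj X Y -> disj X Z -> disj Y Z -> disj (pplus X Y) Z.
Proof. by move=> dXY dXZ dYZ n /(supp_plus dXY) [] nX nZ; [apply: (dXZ n) | apply: (dYZ n)]. Qed.

Lemma disj_plusr (X Y Z : pOb C) : disj X Y -> disj Z X -> disj Z Y -> disj Z (pplus X Y).
Proof. by move=> dXY dZX dZY; apply: disj_sym; apply: disj_plusl => //; apply: disj_sym. Qed.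

End Disjointness.

(** * Sums along families of injections *)

Section Hom.
Variable C : PCat.
Let ax := pax C.

Definition hom (f : pMor C) X Y := pdom f = X /\ pcod f = Y.

Lemma hom_pid X : hom (pid X) X X.
Proof. by split; [apply: ax_dom_id | apply: ax_cod_id]. Qed.

Lemma hom_comp f g X Y Z : hom f X Y -> hom g Y Z -> hom (pcomp g f) X Z.
Proof.
move=> [df cf] [dg cg]; split; first by rewrite (ax_dom_comp ax) // cf dg.
by rewrite (ax_cod_comp ax) // cf dg.
Qed.

Lemma comp_idl f X Y : hom f X Y -> pcomp (pid Y) f = f.
Proof. by move=> [_ <-]; apply: (ax_idl ax). Qed.

Lemma comp_idr f X Y : hom f X Y -> pcomp f (pid X) = f.
Proof. by move=> [<- _]; apply: (ax_idr ax). Qed.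

Lemma hom_act v u f X Y : hom f X Y -> hom (pactm v u f) (pact u X) (pact v Y).
Proof. by move=> [df cf]; split; rewrite ?(ax_act_dom ax) ?(ax_act_cod ax) ?df ?cf. Qed.

Lemma act_comp w v u f g X Y Z : hom f X Y -> hom g Y Z ->
  pcomp (pactm w v g) (pactm v u f) = pactm w u (pcomp g f).
Proof. by move=> [_ cf] [dg _]; apply: (ax_act_comp ax); rewrite cf dg. Qed.

Lemma hom_plus f g X Y X' Y' : hom f X Y -> hom g X' Y' -> disj X X' -> disj Y Y' ->
  hom (pplusm f g) (pplus X X') (pplus Y Y').
Proof.
move=> [df cf] [dg cg] dX dY; have dfg : disjm f g by split; rewrite ?df ?dg ?cf ?cg.
by split; rewrite ?(ax_plus_dom ax dfg) ?(ax_plus_cod ax dfg) ?df ?dg ?cf ?cg.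
Qed.

Lemma plus_comp f f' g g' X X' Y Y' Z Z' :
  hom f X Y -> hom f' X' Y' -> hom g Y Z -> hom g' Y' Z' ->
  disj X X' -> disj Y Y' -> disj Z Z' ->
  pcomp (pplusm g g') (pplusm f f') = pplusm (pcomp g f) (pcomp g' f').
Proof.
move=> [df cf] [df' cf'] [dg cg] [dg' cg'] dX dY dZ.
by symmetry; apply: (ax_plus_comp ax); try split; rewrite ?df ?df' ?dg ?dg' ?cf ?cf' ?cg ?cg'.
Qed.

End Hom.

Lemma homd (C : PCat) (f : pMor C) X Y : hom f X Y -> pdom f = X.
Proof. by case. Qed.

Lemma homc (C : PCat) (f : pMor C) X Y : hom f X Y -> pcod f = Y.
Proof. by case. Qed.

Definition tailf (ps : nat -> inj) : nat -> inj := fun a => ps a.+1.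
Definition shiftf (n : nat) (ps : nat -> inj) : nat -> inj := fun a => ps (a + n).

Lemma jinj_tailf n ps : jinj n.+1 ps -> jinj n (tailf ps).
Proof. by move=> hps a b x y ha hb /hps hab; apply/eq_add_S/hab. Qed.

Lemma jinj_shiftf n m ps : jinj (n + m) ps -> jinj m (shiftf n ps).
Proof. by move=> hps a b x y ha hb /hps hab; apply: (@addIn n); apply: hab; lia. Qed.

Lemma jinj_leq n m ps : n <= m -> jinj m ps -> jinj n ps.
Proof. by move=> lenm hps a b x y ha hb; apply: hps; lia. Qed.

Lemma tailf_catf n ps qs : tailf (catf n.+1 ps qs) = catf n (tailf ps) qs.
Proof. by apply: functional_extensionality => a; rewrite /tailf /catf ltnS subSS. Qed.

Lemma catf0 ps qs : catf 0 ps qs = qs.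
Proof. by apply: functional_extensionality => a; rewrite /catf ltn0 subn0. Qed.

Lemma catf_shiftf n ps : catf n ps (shiftf n ps) = ps.
Proof.
apply: functional_extensionality => a; rewrite /catf /shiftf.
by case: ltnP => // /subnK ->.
Qed.

Lemma shiftf_catf n ps qs : shiftf n (catf n ps qs) = qs.
Proof.
by apply: functional_extensionality => a; rewrite /shiftf /catf addnK ltnNge leq_addl.
Qed.

Lemma catf_left n ps qs a : a < n -> catf n ps qs a = ps a.
Proof. by rewrite /catf => ->. Qed.

Lemma jinj_catl n m ps qs : jinj (n + m) (catf n ps qs) -> jinj n ps.
Proof.
move=> hps a b x y ha hb; rewrite -(catf_left ps qs ha) -(catf_left ps qs hb).
by apply: hps; lia.
Qed.

Lemma jinj_catr n m ps qs : jinj (n + m) (catf n ps qs) -> jinj m qs.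
Proof. by move/jinj_shiftf; rewrite shiftf_catf. Qed.

Lemma jinj_catd n m ps qs a b x y : jinj (n + m) (catf n ps qs) -> a < n -> b < m ->
  ps a x <> qs b y.
Proof.
move=> hps ha hb e; have := hps a (b + n) x y.
rewrite catf_left // -[catf n ps qs (b + n)]/(shiftf n (catf n ps qs) b) shiftf_catf.
by move=> /(_ _ _ e); lia.
Qed.

Lemma jinj_catI n m ps qs : jinj n ps -> jinj m qs ->
  (forall a b x y, a < n -> b < m -> ps a x <> qs b y) ->
  jinj (n + m) (catf n ps qs).
Proof.
move=> hps hqs hd a b x y ha hb; rewrite /catf.
case: ltnP => an; case: ltnP => bn.
- exact: hps.
- by move=> e; case: (hd a (b - n) x y) => //; lia.
- by move=> e; case: (hd b (a - n) y x) => //; lia.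
- by move/hqs; lia.
Qed.

Definition fam_range n (ps : nat -> inj) : nat -> Prop :=
  fun k => exists a x, a < n /\ k = ps a x.

Section Sums.
Variable C : PCat.
Let ax := pax C.

Fixpoint pushr (ps : nat -> inj) (Xs : seq (pOb C)) : pOb C :=
  if Xs is X :: Xs' then pplus (pact (ps 0) X) (pushr (tailf ps) Xs') else pzero C.

Fixpoint pushmr (vs us : nat -> inj) (fs : seq (pMor C)) : pMor C :=
  if fs is f :: fs' then pplusm (pactm (vs 0) (us 0) f) (pushmr (tailf vs) (tailf us) fs')
  else pid (pzero C).

Lemma pushE ps Xs : push ps Xs = pushr ps Xs.
Proof.
elim: Xs ps => [|X Xs IH] ps; first by rewrite /push big_ord0.
rewrite /push /= big_ord_recl /=; congr pplus; rewrite -IH /push.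
by apply: eq_bigr => i _; rewrite /bump leq0n add1n add0n.
Qed.

Lemma pushmrE (vs us : nat -> inj) fs :
  \big[@pplusm C / pid (pzero C)]_(a < size fs) pactm (vs a) (us a) (nth (pid (pzero C)) fs a)
  = pushmr vs us fs.
Proof.
elim: fs vs us => [|f fs IH] vs us; first by rewrite big_ord0.
rewrite /= big_ord_recl /=; congr pplusm; rewrite -IH.
by apply: eq_bigr => i _; rewrite /bump leq0n add1n add0n.
Qed.

Lemma pushmE ps fs : pushm ps fs = pushmr ps ps fs.
Proof. exact: pushmrE. Qed.

Lemma swpE ps qs Xs : swp ps qs Xs = pushmr ps qs (map pid Xs).
Proof.
rewrite -pushmrE /swp size_map; apply: eq_bigr => i _.
by rewrite (nth_map (pzero C)).
Qed.

Lemma supported_in_pushr ps Xs : jinj (size Xs) ps ->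
  supported_in (pushr ps Xs) (fam_range (size Xs) ps).
Proof.
elim: Xs ps => [|X Xs IH] ps hps /=; first exact: supported_in0.
have hps' := jinj_tailf hps.
apply: supported_in_plus.
- apply: disj_supported_in (supported_in_range _ _) (IH _ hps') _.
  by move=> _ [x ->] [a [y [ha e]]]; have := hps 0 a.+1 x y isT ha e.
- by apply: supported_in_act => x; exists 0, x.
- by apply: sub_supported_in (IH _ hps') => k [a [x [ha ->]]]; exists a.+1, x.
Qed.

Lemma disj_act_pushr (u : inj) X qs Ys : jinj (size Ys) qs ->
  (forall b x y, b < size Ys -> u x <> qs b y) -> disj (pact u X) (pushr qs Ys).
Proof.
move=> hqs uqs; apply: disj_supported_in (supported_in_range _ _) (supported_in_pushr hqs) _.
by move=> _ [x ->] [b [y [hb /uqs]]]; apply.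
Qed.

Lemma disj_head ps X Xs : jinj (size Xs).+1 ps -> disj (pact (ps 0) X) (pushr (tailf ps) Xs).
Proof.
move=> hps; apply: disj_act_pushr => [|b x y hb e]; first exact: jinj_tailf.
by have := hps 0 b.+1 x y isT hb e.
Qed.

Lemma hom_pushmr vs us fs : jinj (size fs) vs -> jinj (size fs) us ->
  hom (pushmr vs us fs) (pushr us (map pdom fs)) (pushr vs (map pcod fs)).
Proof.
elim: fs vs us => [|f fs IH] vs us hvs hus /=; first exact: hom_pid.
apply: hom_plus; first exact: hom_act (conj erefl erefl).
- exact: IH (jinj_tailf hvs) (jinj_tailf hus).
- by apply: disj_head; rewrite size_map.
- by apply: disj_head; rewrite size_map.
Qed.

Lemma hom_pushmr_pid vs us Xs : jinj (size Xs) vs -> jinj (size Xs) us ->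
  hom (pushmr vs us (map pid Xs)) (pushr us Xs) (pushr vs Xs).
Proof.
have map_pid (F : pMor C -> pOb C) : F \o pid =1 id -> map F (map pid Xs) = Xs.
  by move=> FK; rewrite -map_comp (eq_map FK) map_id.
move=> hvs hus; have := hom_pushmr (fs := map pid Xs).
by rewrite size_map (map_pid pdom (ax_dom_id ax)) (map_pid pcod (ax_cod_id ax)); apply.
Qed.

Lemma pushmr_id us Xs : jinj (size Xs) us -> pushmr us us (map pid Xs) = pid (pushr us Xs).
Proof.
elim: Xs us => [|X Xs IH] us hus //=.
rewrite IH; last exact: jinj_tailf hus.
by rewrite (ax_act_id ax) (ax_plus_id ax) //; apply: disj_head.
Qed.

Lemma pushmr_pid_comp a b c Xs : jinj (size Xs) a -> jinj (size Xs) b -> jinj (size Xs) c ->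
  pcomp (pushmr a b (map pid Xs)) (pushmr b c (map pid Xs)) = pushmr a c (map pid Xs).
Proof.
elim: Xs a b c => [|X Xs IH] a b c ha hb hc /=; first exact: comp_idl (hom_pid _).
have ha' := jinj_tailf ha; have hb' := jinj_tailf hb; have hc' := jinj_tailf hc.
rewrite (plus_comp (hom_act (b 0) (c 0) (hom_pid X)) (hom_pushmr_pid hb' hc')
  (hom_act (a 0) (b 0) (hom_pid X)) (hom_pushmr_pid ha' hb')); try exact: disj_head.
by rewrite IH // (act_comp _ _ _ (hom_pid X) (hom_pid X)) (comp_idl (hom_pid X)).
Qed.

Lemma disj_pushr_cat ps qs Xs Ys : jinj (size Xs + size Ys) (catf (size Xs) ps qs) ->
  disj (pushr ps Xs) (pushr qs Ys).
Proof.
move=> hpq; apply: disj_supported_in (supported_in_pushr (jinj_catl hpq))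
  (supported_in_pushr (jinj_catr hpq)) _.
by move=> _ [a [x [ha ->]]] [b [y [hb]]]; apply: jinj_catd hpq ha hb.
Qed.

Lemma jinj_cat_tailf ps qs (X : pOb C) (Xs Ys : seq (pOb C)) :
  jinj (size (X :: Xs) + size Ys) (catf (size (X :: Xs)) ps qs) ->
  jinj (size Xs + size Ys) (catf (size Xs) (tailf ps) qs).
Proof. by rewrite -tailf_catf; apply: jinj_tailf. Qed.

Lemma pushr_cat ps qs Xs Ys : jinj (size Xs + size Ys) (catf (size Xs) ps qs) ->
  pushr (catf (size Xs) ps qs) (Xs ++ Ys) = pplus (pushr ps Xs) (pushr qs Ys).
Proof.
elim: Xs ps => [|X Xs IH] ps hpq /=; first by rewrite catf0 (ax_unitl_ob ax).
rewrite tailf_catf IH; last exact: jinj_cat_tailf hpq.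
rewrite catf_left // (ax_assoc_ob ax) //.
- exact: disj_head (jinj_catl hpq).
- apply: disj_act_pushr (jinj_catr hpq) _ => b x y hb.
  exact: jinj_catd hpq (ltn0Sn _) hb.
- exact: disj_pushr_cat (jinj_cat_tailf hpq).
Qed.

Lemma pushmr_cat v v' u u' fs gs :
  jinj (size fs + size gs) (catf (size fs) v v') ->
  jinj (size fs + size gs) (catf (size fs) u u') ->
  pushmr (catf (size fs) v v') (catf (size fs) u u') (fs ++ gs) =
  pplusm (pushmr v u fs) (pushmr v' u' gs).
Proof.
elim: fs v u => [|f fs IH] v u hv hu /=; first by rewrite !catf0 (ax_unitl_mor ax).
have hv' : jinj (size fs + size gs) (catf (size fs) (tailf v) v').
  by rewrite -tailf_catf; apply: jinj_tailf.
have hu' : jinj (size fs + size gs) (catf (size fs) (tailf u) u').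
  by rewrite -tailf_catf; apply: jinj_tailf.
rewrite !tailf_catf IH // !catf_left //.
have [d1 c1] := hom_pushmr (jinj_tailf (jinj_catl hv)) (jinj_tailf (jinj_catl hu)).
have [d2 c2] := hom_pushmr (jinj_catr hv) (jinj_catr hu).
rewrite (ax_assoc_mor ax) //.
- split; rewrite ?(ax_act_dom ax) ?(ax_act_cod ax) ?d1 ?c1; apply: disj_head; rewrite size_map.
  + exact: jinj_catl hu.
  + exact: jinj_catl hv.
- split; rewrite ?(ax_act_dom ax) ?(ax_act_cod ax) ?d2 ?c2; apply: disj_act_pushr;
    rewrite ?size_map; do ?[exact: jinj_catr hu | exact: jinj_catr hv];
    move=> b x y hb; [exact: jinj_catd hu (ltn0Sn _) hb | exact: jinj_catd hv (ltn0Sn _) hb].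
- split; rewrite ?d1 ?c1 ?d2 ?c2; apply: disj_pushr_cat; rewrite !size_map //.
Qed.

Lemma push_cat ps qs (Xs Ys : seq (pOb C)) : jinj (size Xs + size Ys) (catf (size Xs) ps qs) ->
  push (catf (size Xs) ps qs) (Xs ++ Ys) = pplus (push ps Xs) (push qs Ys).
Proof. by rewrite !pushE; apply: pushr_cat. Qed.

Lemma swp_cat a b c d (Xs Ys : seq (pOb C)) :
  jinj (size Xs + size Ys) (catf (size Xs) a b) ->
  jinj (size Xs + size Ys) (catf (size Xs) c d) ->
  swp (catf (size Xs) a b) (catf (size Xs) c d) (Xs ++ Ys) = pplusm (swp a c Xs) (swp b d Ys).
Proof.
rewrite !swpE map_cat.
by have := pushmr_cat (fs := map pid Xs) (gs := map pid Ys) (v := a) (v' := b) (u := c) (u' := d);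
  rewrite !size_map.
Qed.

Lemma disj_push_cat ps qs (Xs Ys : seq (pOb C)) :
  jinj (size Xs + size Ys) (catf (size Xs) ps qs) -> disj (push ps Xs) (push qs Ys).
Proof. by rewrite !pushE; apply: disj_pushr_cat. Qed.

Lemma hom_plus_cat f g ps ps' qs qs' (Xs Xs' Ys Ys' : seq (pOb C)) :
  jinj (size Xs + size Xs') (catf (size Xs) ps ps') ->
  jinj (size Ys + size Ys') (catf (size Ys) qs qs') ->
  hom f (push ps Xs) (push qs Ys) -> hom g (push ps' Xs') (push qs' Ys') ->
  hom (pplusm f g) (push (catf (size Xs) ps ps') (Xs ++ Xs'))
    (push (catf (size Ys) qs qs') (Ys ++ Ys')).
Proof.
move=> hp hq hf hg; rewrite !push_cat //.
by apply: hom_plus hf hg _ _; apply: disj_push_cat.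
Qed.

Lemma hom_swp ps qs (Xs : seq (pOb C)) : jinj (size Xs) ps -> jinj (size Xs) qs ->
  hom (swp ps qs Xs) (push qs Xs) (push ps Xs).
Proof. by rewrite swpE !pushE; apply: hom_pushmr_pid. Qed.

Lemma swp_comp a b c (Xs : seq (pOb C)) :
  jinj (size Xs) a -> jinj (size Xs) b -> jinj (size Xs) c ->
  pcomp (swp a b Xs) (swp b c Xs) = swp a c Xs.
Proof. by rewrite !swpE; apply: pushmr_pid_comp. Qed.

Lemma swp_id a (Xs : seq (pOb C)) : jinj (size Xs) a -> swp a a Xs = pid (push a Xs).
Proof. by rewrite swpE pushE; apply: pushmr_id. Qed.

End Sums.

Lemma jinj_canon n : jinj n (canon n).
Proof.
move=> a b x y ha hb /= /(congr1 (modn^~ n.+1)).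
by rewrite !modnMDl !modn_small //; lia.
Qed.

Definition evenf (ps : nat -> inj) : nat -> inj := fun a => evn (ps a).
Definition oddf (ps : nat -> inj) : nat -> inj := fun a => odn (ps a).

Lemma jinj_even_odd n m ps qs :
  jinj n ps -> jinj m qs -> jinj (n + m) (catf n (evenf ps) (oddf qs)).
Proof.
move=> hps hqs; apply: jinj_catI => [a b x y ha hb /double_inj|a b x y ha hb [/double_inj]|].
- exact: hps.
- exact: hqs.
- by move=> a b x y _ _ /(congr1 odd); rewrite /= !odd_double.
Qed.

Definition idf : nat -> inj := fun _ => inj1.

(* [std 1] is [idf] so that flattening [[:: X]] gives back [X] itself. *)
Definition std (n : nat) : nat -> inj := if n == 1 then idf else canon n.

Lemma jinj_std n : jinj n (std n).
Proof. by rewrite /std; case: eqP => [-> a b x y|_]; [lia | exact: jinj_canon]. Qed.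

Lemma jinj1 ps : jinj 1 ps.
Proof. by move=> a b x y ha hb; lia. Qed.

Lemma jinj0 ps : jinj 0 ps.
Proof. by []. Qed.

#[export] Hint Resolve jinj_std jinj1 jinj0 : core.

Create HintDb hom.
#[export] Hint Resolve hom_pid hom_comp hom_act hom_swp : hom.
Ltac homs := solve [eauto 10 with hom].

Ltac composable := match goal with |- pcod ?f = pdom ?g =>
  let hf := fresh in let hg := fresh in
  eassert (hf : hom f _ _) by homs; eassert (hg : hom g _ _) by homs;
  rewrite (homc hf) (homd hg); clear hf hg; try reflexivity
| |- pcod ?f = _ => let hf := fresh in
  eassert (hf : hom f _ _) by homs; rewrite (homc hf); clear hf; try reflexivity end.

Lemma compAr (C : PCat) (f g h : pMor C) : pcod f = pdom g -> pcod g = pdom h ->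
  pcomp (pcomp h g) f = pcomp h (pcomp g f).
Proof. by move=> fg gh; rewrite (ax_assoc (pax C)). Qed.

Ltac reassoc := repeat match goal with |- context [pcomp (pcomp ?h ?g) ?f] =>
  rewrite (@compAr _ f g h); [| composable | composable] end.

Section Recast.
Variable C : PCat.
Let ax := pax C.

(* [recast] transports [f : push ps Xs -> push qs Ys] to [push ps' Xs -> push qs' Ys]
   along the canonical isomorphisms; [(psi, f, phi) ~ (psi', f', phi')] reads
   [f' = recast src tgt phi phi' psi psi' f]. *)
Definition recast (Xs Ys : seq (pOb C)) (ps ps' qs qs' : nat -> inj) (f : pMor C) :=
  pcomp (swp qs' qs Ys) (pcomp f (swp ps ps' Xs)).

Lemma swp_comp_r a b c (Xs : seq (pOb C)) k :
  jinj (size Xs) a -> jinj (size Xs) b -> jinj (size Xs) c -> pcod k = push c Xs ->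
  pcomp (swp a b Xs) (pcomp (swp b c Xs) k) = pcomp (swp a c Xs) k.
Proof.
move=> ha hb hc hk; rewrite (ax_assoc ax) ?swp_comp //; first by rewrite hk (homd (hom_swp hb hc)).
by rewrite (homc (hom_swp hb hc)) (homd (hom_swp ha hb)).
Qed.

Variables (Xs Ys : seq (pOb C)) (ps ps' ps'' qs qs' qs'' : nat -> inj).
Hypotheses (hps : jinj (size Xs) ps) (hps' : jinj (size Xs) ps') (hps'' : jinj (size Xs) ps'').
Hypotheses (hqs : jinj (size Ys) qs) (hqs' : jinj (size Ys) qs') (hqs'' : jinj (size Ys) qs'').

Lemma hom_recast f : hom f (push ps Xs) (push qs Ys) ->
  hom (recast Xs Ys ps ps' qs qs' f) (push ps' Xs) (push qs' Ys).
Proof. by move=> hf; rewrite /recast; homs. Qed.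

Lemma recast_id f : hom f (push ps Xs) (push qs Ys) -> recast Xs Ys ps ps qs qs f = f.
Proof. by move=> hf; rewrite /recast !swp_id // (comp_idr hf) (comp_idl hf). Qed.

Lemma recastK f : hom f (push ps Xs) (push qs Ys) ->
  recast Xs Ys ps' ps'' qs' qs'' (recast Xs Ys ps ps' qs qs' f) = recast Xs Ys ps ps'' qs qs'' f.
Proof.
move=> hf; rewrite /recast; reassoc.
by rewrite swp_comp // swp_comp_r //; composable.
Qed.

End Recast.

Section RecastOps.
Variable C : PCat.

Lemma recast_comp (Xs Ys Zs : seq (pOb C)) ps ps' qs qs' rs rs' f g :
  jinj (size Xs) ps -> jinj (size Xs) ps' -> jinj (size Ys) qs -> jinj (size Ys) qs' ->
  jinj (size Zs) rs -> jinj (size Zs) rs' ->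
  hom f (push ps Xs) (push qs Ys) -> hom g (push qs Ys) (push rs Zs) ->
  pcomp (recast Ys Zs qs qs' rs rs' g) (recast Xs Ys ps ps' qs qs' f) =
  recast Xs Zs ps ps' rs rs' (pcomp g f).
Proof.
move=> hps hps' hqs hqs' hrs hrs' hf hg; rewrite /recast; reassoc.
by rewrite swp_comp_r ?swp_id ?(comp_idl (X := push ps' Xs)) //; [homs | composable].
Qed.

Lemma recast_cat (Xs1 Xs2 Ys1 Ys2 : seq (pOb C)) ps1 ps1' ps2 ps2' qs1 qs1' qs2 qs2' f g :
  let n := size Xs1 in let k := size Ys1 in
  jinj (n + size Xs2) (catf n ps1 ps2) -> jinj (n + size Xs2) (catf n ps1' ps2') ->
  jinj (k + size Ys2) (catf k qs1 qs2) -> jinj (k + size Ys2) (catf k qs1' qs2') ->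
  hom f (push ps1 Xs1) (push qs1 Ys1) -> hom g (push ps2 Xs2) (push qs2 Ys2) ->
  recast (Xs1 ++ Xs2) (Ys1 ++ Ys2) (catf n ps1 ps2) (catf n ps1' ps2') (catf k qs1 qs2)
    (catf k qs1' qs2') (pplusm f g) =
  pplusm (recast Xs1 Ys1 ps1 ps1' qs1 qs1' f) (recast Xs2 Ys2 ps2 ps2' qs2 qs2' g).
Proof.
move=> n k hp hp' hq hq' hf hg.
have [hp1 hp2] := (jinj_catl hp, jinj_catr hp); have [hp1' hp2'] := (jinj_catl hp', jinj_catr hp').
have [hq1 hq2] := (jinj_catl hq, jinj_catr hq); have [hq1' hq2'] := (jinj_catl hq', jinj_catr hq').
rewrite /recast !swp_cat //.
rewrite (plus_comp (hom_swp hp1 hp1') (hom_swp hp2 hp2') hf hg); try exact: disj_push_cat.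
rewrite (plus_comp (hom_comp (hom_swp hp1 hp1') hf) (hom_comp (hom_swp hp2 hp2') hg)
  (hom_swp hq1' hq1) (hom_swp hq2' hq2)) //; exact: disj_push_cat.
Qed.

End RecastOps.

(** * Flattening Sigma(C) into C *)

Section Flatten.
Variable C : PCat.
Implicit Types (m : SigMor C) (Xs Ys Zs : seq (pOb C)).

Definition flat Xs := push (std (size Xs)) Xs.

Definition flatm m := recast (s_src m) (s_tgt m) (s_phi m) (std (size (s_src m)))
  (s_psi m) (std (size (s_tgt m))) (s_f m).

Lemma hom_s_f m : hom (s_f m) (push (s_phi m) (s_src m)) (push (s_psi m) (s_tgt m)).
Proof. exact: conj (s_dom m) (s_cod m). Qed.

Lemma hom_flatm m : hom (flatm m) (flat (s_src m)) (flat (s_tgt m)).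
Proof. by apply: hom_recast (hom_s_f m); [exact: s_phiP | | exact: s_psiP |]. Qed.

Lemma mkSigE src tgt phi psi (f : pMor C) :
  hom f (push phi src) (push psi tgt) -> jinj (size src) phi -> jinj (size tgt) psi ->
  let m := mkSig src tgt phi psi f in
  [/\ s_src m = src, s_tgt m = tgt, s_phi m = phi, s_psi m = psi & s_f m = f].
Proof.
move=> [df cf] hphi hpsi; rewrite /mkSig.
by case: excluded_middle_informative => [[? [? [? ?]]] | []].
Qed.

Lemma sig_rel_flatm m m' : sig_rel m m' -> flatm m = flatm m'.
Proof.
case: m m' => [s t phi psi f hphi hpsi df cf] [s' t' phi' psi' f' hphi' hpsi' df' cf'].
move=> [/= es [/= et ef]]; subst s' t'.
by rewrite /flatm /= ef recastK //; exact: conj df cf.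
Qed.

Lemma flatm_heq m m' : smheq (s := Sigma C) m m' -> flatm m = flatm m'.
Proof. by elim=> [x y /sig_rel_flatm | x | x y _ -> | x y z _ -> _ ->]. Qed.

(* Conversely, a representative is recovered from its flattening by recasting. *)
Lemma heq_flatm m m' : s_src m = s_src m' -> s_tgt m = s_tgt m' -> flatm m = flatm m' ->
  smheq (s := Sigma C) m m'.
Proof.
case: m m' => [s t phi psi f hphi hpsi df cf] [s' t' phi' psi' f' hphi' hpsi' df' cf'].
rewrite /flatm /= => es et; subst s' t' => e; apply: rst_step; split => //; split => //=.
have hf : hom f (push phi s) (push psi t) := conj df cf.
have hf' : hom f' (push phi' s) (push psi' t) := conj df' cf'.
rewrite -(recast_id hphi' hpsi' hf').
rewrite -(@recastK _ s t phi' (std (size s)) phi' psi' (std (size t)) psi') //.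
by rewrite -e recastK.
Qed.

Definition flattens m Xs Ys (g : pMor C) := [/\ s_src m = Xs, s_tgt m = Ys & flatm m = g].

Lemma flattens_flatm m : flattens m (s_src m) (s_tgt m) (flatm m).
Proof. by []. Qed.

Lemma flattens_eq m Xs Ys g g' : flattens m Xs Ys g -> g = g' -> flattens m Xs Ys g'.
Proof. by move=> + <-. Qed.

Lemma flattens_hom m Xs Ys g : flattens m Xs Ys g -> hom g (flat Xs) (flat Ys).
Proof. by case=> <- <- <-; apply: hom_flatm. Qed.

Lemma flattens_ishom m Xs Ys g : flattens m Xs Ys g -> ishom (S := Sigma C) m Xs Ys.
Proof. by case. Qed.

Lemma heq_flattens m m' Xs Ys g g' : flattens m Xs Ys g -> flattens m' Xs Ys g' -> g = g' ->
  smheq (s := Sigma C) m m'.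
Proof. by case=> es et <- [es' et' <-] e; apply: heq_flatm; rewrite ?es ?es' ?et ?et'. Qed.

Lemma flattens_mkSig src tgt phi psi (f : pMor C) :
  hom f (push phi src) (push psi tgt) -> jinj (size src) phi -> jinj (size tgt) psi ->
  flattens (mkSig src tgt phi psi f) src tgt
    (recast src tgt phi (std (size src)) psi (std (size tgt)) f).
Proof.
by move=> hf hphi hpsi; rewrite /flattens /flatm; have [-> -> -> -> ->] := mkSigE hf hphi hpsi.
Qed.

Lemma flattens_sig_id Xs : flattens (sig_id Xs) Xs Xs (pid (flat Xs)).
Proof.
have hc := @jinj_canon (size Xs).
apply: flattens_eq (flattens_mkSig (hom_pid _) hc hc) _.
by rewrite /recast (comp_idl (X := push (std (size Xs)) Xs)) ?swp_comp ?swp_id //; homs.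
Qed.

Lemma flattens_sig_comp f g Xs Ys Zs a b :
  flattens f Xs Ys a -> flattens g Ys Zs b -> flattens (sig_comp g f) Xs Zs (pcomp b a).
Proof.
case: f => s t phi psi f hphi hpsi df cf; case: g => s' t' th rho g hth hrho dg cg.
move=> [/= <- et <-] [/= es' <- <-]; subst t s'.
have hf : hom f (push phi s) (push psi Ys) := conj df cf.
have hg : hom g (push th Ys) (push rho t') := conj dg cg.
rewrite /sig_comp /=.
have -> : pcomp (swp th psi Ys) f = recast s Ys phi phi psi th f.
  by rewrite /recast swp_id // (comp_idr hf).
have hf' := hom_recast hphi hphi hpsi hth hf.
apply: flattens_eq (flattens_mkSig (hom_comp hf' hg) hphi hrho) _.
by rewrite /flatm /= -(recast_comp (ps' := std (size s)) (qs' := std (size Ys))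
  (rs' := std (size t')) _ _ _ _ _ _ hf' hg) ?recastK.
Qed.

Lemma flattens_sig_tensm m1 m2 Xs1 Ys1 Xs2 Ys2 a b :
  flattens m1 Xs1 Ys1 a -> flattens m2 Xs2 Ys2 b ->
  let P := std (size (Xs1 ++ Xs2)) in let Q := std (size (Ys1 ++ Ys2)) in
  flattens (sig_tensm m1 m2) (Xs1 ++ Xs2) (Ys1 ++ Ys2)
    (pplusm (recast Xs1 Ys1 (std (size Xs1)) P (std (size Ys1)) Q a)
       (recast Xs2 Ys2 (std (size Xs2)) (shiftf (size Xs1) P)
          (std (size Ys2)) (shiftf (size Ys1) Q) b)).
Proof.
case: m1 => s1 t1 p1 q1 f1 hp1 hq1 d1 c1; case: m2 => s2 t2 p2 q2 f2 hp2 hq2 d2 c2.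
move=> [/= <- <- <-] [/= <- <- <-].
set P := std (size (s1 ++ s2)); set Q := std (size (t1 ++ t2)).
have hf1 : hom f1 (push p1 s1) (push q1 t1) := conj d1 c1.
have hf2 : hom f2 (push p2 s2) (push q2 t2) := conj d2 c2.
have hp := jinj_even_odd hp1 hp2; have hq := jinj_even_odd hq1 hq2.
have hp1e := jinj_catl hp; have hp2o := jinj_catr hp.
have hq1e := jinj_catl hq; have hq2o := jinj_catr hq.
have hf1' := hom_recast hp1 hp1e hq1 hq1e hf1.
have hf2' := hom_recast hp2 hp2o hq2 hq2o hf2.
rewrite /sig_tensm /=.
have hpc : jinj (size (s1 ++ s2)) (catf (size s1) (evenf p1) (oddf p2)) by rewrite size_cat.
have hqc : jinj (size (t1 ++ t2)) (catf (size t1) (evenf q1) (oddf q2)) by rewrite size_cat.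
apply: flattens_eq (flattens_mkSig (hom_plus_cat hp hq hf1' hf2') hpc hqc) _.
have hP : jinj (size s1 + size s2) P by rewrite /P -size_cat.
have hQ : jinj (size t1 + size t2) Q by rewrite /Q -size_cat.
rewrite /flatm /= -/P -/Q -{1}(catf_shiftf (size s1) P) -{1}(catf_shiftf (size t1) Q).
rewrite recast_cat ?catf_shiftf //.
have hP1 := jinj_leq (leq_addr _ _) hP; have hP2 := jinj_shiftf hP.
have hQ1 := jinj_leq (leq_addr _ _) hQ; have hQ2 := jinj_shiftf hQ.
by rewrite !recastK.
Qed.

Lemma flattens_sig_comp_id m Xs Ys g :
  flattens m Xs Ys g -> flattens (sig_comp m (sig_id Xs)) Xs Ys g.
Proof.
move=> hm; apply: flattens_eq (flattens_sig_comp (flattens_sig_id Xs) hm) _.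
exact: comp_idr (flattens_hom hm).
Qed.

Lemma flatm_sig_id Xs : flatm (sig_id Xs) = pid (flat Xs).
Proof. by case: (flattens_sig_id Xs). Qed.

Lemma flatm_sig_comp f g : s_tgt f = s_src g -> flatm (sig_comp g f) = pcomp (flatm g) (flatm f).
Proof.
move=> fg; have hf := flattens_flatm f; rewrite fg in hf.
by case: (flattens_sig_comp hf (flattens_flatm g)).
Qed.

Lemma isiso_flattens m m' Xs Ys g g' : flattens m Xs Ys g -> flattens m' Ys Xs g' ->
  pcomp g' g = pid (flat Xs) -> pcomp g g' = pid (flat Ys) -> isiso (S := Sigma C) m.
Proof.
move=> hm hm' g'g gg'; have [es et _] := hm; have [es' et' _] := hm'.
exists m'; split; first by split; rewrite /= ?es ?et.
rewrite /= es et; split.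
- exact: heq_flattens (flattens_sig_comp hm hm') (flattens_sig_id Xs) g'g.
- exact: heq_flattens (flattens_sig_comp hm' hm) (flattens_sig_id Ys) gg'.
Qed.

End Flatten.

Section Morphisms.
Variables (C D : PCat) (F : PMor C D).
Let fF := Fax F.

Lemma Fo_pushr ps Xs : jinj (size Xs) ps -> Fo F (pushr ps Xs) = pushr ps (map (Fo F) Xs).
Proof.
elim: Xs ps => [|X Xs IH] ps hps /=; first exact: fax_zero fF.
rewrite (fax_plus_ob fF); last exact: disj_head.
by rewrite (fax_act_ob fF) IH //; apply: jinj_tailf.
Qed.

Lemma Fo_push ps Xs : jinj (size Xs) ps -> Fo F (push ps Xs) = push ps (map (Fo F) Xs).
Proof. by rewrite !pushE; apply: Fo_pushr. Qed.

Lemma SigmaF_mkSig src tgt phi psi (f : pMor C) :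
  hom f (push phi src) (push psi tgt) -> jinj (size src) phi -> jinj (size tgt) psi ->
  SigmaF F (mkSig src tgt phi psi f) = mkSig (map (Fo F) src) (map (Fo F) tgt) phi psi (Fm F f).
Proof. by move=> hf hphi hpsi; rewrite /SigmaF; have [-> -> -> -> ->] := mkSigE hf hphi hpsi. Qed.

End Morphisms.

Section SmallSums.
Variable C : PCat.
Let ax := pax C.

Lemma act1 (X : pOb C) : pact inj1 X = X.
Proof. exact: (ax_act_unit_ob ax). Qed.

Lemma push0 ps : push ps [::] = pzero C.
Proof. by rewrite /push big_ord0. Qed.

Lemma push1 ps (X : pOb C) : push ps [:: X] = pact (ps 0) X.
Proof. by rewrite pushE /= (ax_unitr_ob ax). Qed.

Lemma push2 ps (X Y : pOb C) : push ps [:: X; Y] = pplus (pact (ps 0) X) (pact (ps 1) Y).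
Proof. by rewrite pushE /= (ax_unitr_ob ax). Qed.

Lemma push3 ps (X Y Z : pOb C) :
  push ps [:: X; Y; Z] = pplus (pact (ps 0) X) (pplus (pact (ps 1) Y) (pact (ps 2) Z)).
Proof. by rewrite pushE /= (ax_unitr_ob ax). Qed.

Lemma push_idf1 (X : pOb C) : push idf [:: X] = X.
Proof. by rewrite push1 act1. Qed.

Lemma flat0 : flat [::] = pzero C.
Proof. exact: push0. Qed.

Lemma flat1 (X : pOb C) : flat [:: X] = X.
Proof. exact: push_idf1. Qed.

Lemma swp0 ps qs : swp ps qs [::] = pid (pzero C).
Proof. by rewrite /swp big_ord0. Qed.

Lemma swp1 ps qs (X : pOb C) : swp ps qs [:: X] = pactm (ps 0) (qs 0) (pid X).
Proof. by rewrite swpE /= (ax_unitr_mor ax). Qed.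

Lemma swp2 ps qs (X Y : pOb C) :
  swp ps qs [:: X; Y] = pplusm (pactm (ps 0) (qs 0) (pid X)) (pactm (ps 1) (qs 1) (pid Y)).
Proof. by rewrite swpE /= (ax_unitr_mor ax). Qed.

Lemma swp3 ps qs (X Y Z : pOb C) : swp ps qs [:: X; Y; Z] =
  pplusm (pactm (ps 0) (qs 0) (pid X))
    (pplusm (pactm (ps 1) (qs 1) (pid Y)) (pactm (ps 2) (qs 2) (pid Z))).
Proof. by rewrite swpE /= (ax_unitr_mor ax). Qed.

Lemma pushm2 ps (f g : pMor C) :
  pushm ps [:: f; g] = pplusm (pactm (ps 0) (ps 0) f) (pactm (ps 1) (ps 1) g).
Proof. by rewrite pushmE /= (ax_unitr_mor ax). Qed.

Lemma act_unit_mor (f : pMor C) : pactm inj1 inj1 f = f.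
Proof. exact: (ax_act_unit_mor ax). Qed.

Lemma act_act (v v' u u' : inj) (f : pMor C) :
  pactm v u (pactm v' u' f) = pactm (injM v v') (injM u u') f.
Proof. by rewrite (ax_act_mul_mor ax). Qed.

Lemma act_pid_comp w v u f (X Y : pOb C) : hom f X Y ->
  pcomp (pactm w v (pid Y)) (pactm v u f) = pactm w u f.
Proof. by move=> hf; rewrite (act_comp _ _ _ hf (hom_pid Y)) (comp_idl hf). Qed.

Lemma act_comp_pid w v u f (X Y : pOb C) : hom f X Y ->
  pcomp (pactm w v f) (pactm v u (pid X)) = pactm w u f.
Proof. by move=> hf; rewrite (act_comp _ _ _ (hom_pid X) hf) (comp_idr hf). Qed.

Lemma act_pid_comp2 w1 w2 v1 v2 u1 u2 (X Y : pOb C) :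
  disj (pact u1 X) (pact u2 Y) -> disj (pact v1 X) (pact v2 Y) -> disj (pact w1 X) (pact w2 Y) ->
  pcomp (pplusm (pactm w1 v1 (pid X)) (pactm w2 v2 (pid Y)))
        (pplusm (pactm v1 u1 (pid X)) (pactm v2 u2 (pid Y))) =
  pplusm (pactm w1 u1 (pid X)) (pactm w2 u2 (pid Y)).
Proof.
move=> du dv dw; rewrite (plus_comp (hom_act v1 u1 (hom_pid X)) (hom_act v2 u2 (hom_pid Y))
  (hom_act w1 v1 (hom_pid X)) (hom_act w2 v2 (hom_pid Y))) //.
by rewrite !(act_pid_comp _ _ _ (hom_pid _)).
Qed.

Lemma recast1 f ps qs (X Y : pOb C) : hom f X Y ->
  recast [:: X] [:: Y] idf ps idf qs f = pactm (qs 0) (ps 0) f.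
Proof.
move=> hf; rewrite /recast !swp1 -{1}[f]act_unit_mor.
by rewrite (act_comp_pid inj1 inj1 (ps 0) hf) (act_pid_comp (qs 0) inj1 (ps 0) hf).
Qed.

(* [h := [v,u]_0] satisfies [h + h = h] and is invertible, so the interchange law
   forces [h = id]. *)
Lemma act_pid0 (v u : inj) : pactm v u (pid (pzero C)) = pid (pzero C).
Proof.
set O := pzero C; have dO : disj O O := @disjX0 C O.
have homO (v' u' : inj) : hom (pactm v' u' (pid O)) O O.
  by have := hom_act v' u' (hom_pid O); rewrite /O !act0.
set h := pactm v u (pid O); set h' := pactm u v (pid O).
have hh : pplusm h h = h.
  rewrite /h -(ax_equiv_mor ax) ?(ax_unitl_mor ax) //.
  by split; rewrite ?(ax_dom_id ax) ?(ax_cod_id ax).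
have hh' : pcomp h h' = pid O.
  by rewrite /h /h' (act_pid_comp _ _ _ (hom_pid O)) (ax_act_id ax) act0.
have := plus_comp (hom_pid O) (homO u v) (homO v u) (homO v u) dO dO dO.
by rewrite hh (ax_unitl_mor ax) hh' (comp_idr (homO v u)) (ax_unitr_mor ax).
Qed.

Lemma act_pid_sum (v u a b : inj) (X Y : pOb C) : disj (pact a X) (pact b Y) ->
  pactm v u (pid (pplus (pact a X) (pact b Y))) =
  pplusm (pactm (injM v a) (injM u a) (pid X)) (pactm (injM v b) (injM u b) (pid Y)).
Proof.
move=> dXY; rewrite -(ax_plus_id ax) // (ax_equiv_mor ax).
  by rewrite -!(ax_act_id ax) !act_act.
by split; rewrite ?(ax_dom_id ax) ?(ax_cod_id ax).
Qed.

End SmallSums.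

(** * The comparison functor *)

Section Phi.
Variable mu : 'I_2 * nat -> nat.
Hypothesis Hmu : injective mu.

Notation mu1 := (musec Hmu ord0).
Notation mu2 := (musec Hmu ord_max).
Notation muf := (fam [:: mu1; mu2]).

(* [apart] proves [u x <> v y] for composites [u], [v] of [mu1], [mu2] and [canon n i]
   by peeling off common injective layers. *)
Ltac apart_eq e := first [ lia
  | let ea := fresh in
    have [ea {}e] := (congr1 (fun p => val p.1) (Hmu e), congr1 snd (Hmu e));
    simpl in ea, e; apart_eq e
  | match type of e with ?a * _ + _ = ?b * _ + _ => have {}e : a = b by lia end; apart_eq e ].
Ltac apart := let x := fresh "x" in let y := fresh "y" in let e := fresh "e" in
  move=> x y /= e; apart_eq e.
Ltac disj_tac :=
  solve [repeat first [apply: disj_plusl | apply: disj_plusr | apply: disj_act; apart]].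

#[local] Hint Resolve hom_plus : hom.
#[local] Hint Extern 1 (disj _ _) => disj_tac : hom.

Ltac disjm_tac := match goal with |- disjm ?f ?g =>
  let hf := fresh in let hg := fresh in
  eassert (hf : hom f _ _) by homs; eassert (hg : hom g _ _) by homs; split;
  rewrite ?(homd hf) ?(homd hg) ?(homc hf) ?(homc hg); clear hf hg; disj_tac end.
Ltac interchange :=
  rewrite -(ax_plus_comp (pax _)); [| disjm_tac | disjm_tac | composable | composable].

Lemma jinj_muf : jinj 2 muf.
Proof. by move=> [|[|a]] [|[|b]] x y //= _ _ e; apart_eq e. Qed.

Section OverC.
Variable C : PCat.
Let ax := pax C.

Definition tens (X Y : pOb C) := push muf [:: X; Y].

Definition phim (f : pMor C) : SigMor C := mkSig [:: pdom f] [:: pcod f] idf idf f.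
Definition phi_mu (X Y : pOb C) : SigMor C :=
  mkSig [:: X; Y] [:: tens X Y] muf idf (pid (tens X Y)).
Definition phi_eps : SigMor C := mkSig [::] [:: pzero C] idf idf (pid (pzero C)).

Lemma hom_phim (f : pMor C) : hom f (push idf [:: pdom f]) (push idf [:: pcod f]).
Proof. by rewrite !push_idf1. Qed.

Lemma flattens_phim f X Y : hom f X Y -> flattens (phim f) [:: X] [:: Y] f.
Proof.
case=> <- <-; apply: flattens_eq (flattens_mkSig (hom_phim f) _ _) _ => //.
exact: recast_id (hom_phim f).
Qed.

Lemma hom_phi_mu (X Y : pOb C) : hom (pid (tens X Y)) (push muf [:: X; Y]) (push idf [:: tens X Y]).
Proof. by rewrite push_idf1; apply: hom_pid. Qed.

Lemma hom_phi_eps : hom (pid (pzero C)) (push idf [::]) (push idf [:: pzero C]).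
Proof. by rewrite push_idf1 push0; apply: hom_pid. Qed.

Lemma flattens_phi_mu X Y :
  flattens (phi_mu X Y) [:: X; Y] [:: tens X Y] (swp muf (std 2) [:: X; Y]).
Proof.
apply: flattens_eq (flattens_mkSig (hom_phi_mu X Y) jinj_muf _) _ => //.
rewrite /recast swp_id // -/(flat [:: tens X Y]) flat1.
by rewrite !(comp_idl (hom_swp (Xs := [:: X; Y]) jinj_muf (@jinj_std 2))).
Qed.

Lemma flattens_phi_eps : flattens phi_eps [::] [:: pzero C] (pid (pzero C)).
Proof.
apply: flattens_eq (flattens_mkSig hom_phi_eps _ _) _ => //.
by rewrite /recast swp_id // swp0 push_idf1 !(comp_idl (hom_pid _)).
Qed.

Definition Phi : SMFun (mu_star Hmu C) (Sigma C) :=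
  {| fo := (fun X => [:: X]) : smOb (mu_star Hmu C) -> smOb (Sigma C);
     fm := phim : smMor (mu_star Hmu C) -> smMor (Sigma C);
     fmu := phi_mu; feps := phi_eps |}.

Lemma Phi_functor : is_functor (fo Phi) (fm Phi).
Proof.
split=> [f | f g -> | X | f g fg] /=.
- by have [-> -> _] := flattens_phim (conj (erefl (pdom f)) (erefl (pcod f))).
- exact: rst_refl.
- by apply: heq_flattens (flattens_phim (hom_pid X)) (flattens_sig_id _) _; rewrite flat1.
- have hf : hom f (pdom f) (pdom g) by [].
  have hg : hom g (pdom g) (pcod g) by [].
  exact: heq_flattens (flattens_phim (hom_comp hf hg))
    (flattens_sig_comp (flattens_phim hf) (flattens_phim hg)) erefl.
Qed.

Definition counit (Ys : seq (pOb C)) : SigMor C :=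
  mkSig [:: flat Ys] Ys idf (std (size Ys)) (pid (flat Ys)).
Definition counit_inv (Ys : seq (pOb C)) : SigMor C :=
  mkSig Ys [:: flat Ys] (std (size Ys)) idf (pid (flat Ys)).

Lemma flattens_counit Ys : flattens (counit Ys) [:: flat Ys] Ys (pid (flat Ys)).
Proof.
have h : hom (pid (flat Ys)) (push idf [:: flat Ys]) (push (std (size Ys)) Ys).
  by rewrite push_idf1; apply: hom_pid.
by apply: flattens_eq (flattens_mkSig h _ _) _; rewrite // recast_id.
Qed.

Lemma flattens_counit_inv Ys : flattens (counit_inv Ys) Ys [:: flat Ys] (pid (flat Ys)).
Proof.
have h : hom (pid (flat Ys)) (push (std (size Ys)) Ys) (push idf [:: flat Ys]).
  by rewrite push_idf1; apply: hom_pid.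
by apply: flattens_eq (flattens_mkSig h _ _) _; rewrite // recast_id.
Qed.

Lemma Phi_equiv : cat_equivalence Phi.
Proof.
exists (@flat C), (@flatm C), (fun X => pid X), counit; split.
- split=> [m | m m' /flatm_heq | Xs | f g fg] //=.
  + exact: hom_flatm.
  + exact: flatm_sig_id.
  + exact: flatm_sig_comp.
- split=> [X | f] /=.
    rewrite flat1; split; first exact: hom_pid.
    exists (pid X); rewrite /ishom /= (ax_dom_id ax) (ax_cod_id ax).
    by rewrite (comp_idl (hom_pid X)).
  have hf : hom f (pdom f) (pcod f) by [].
  have [_ _ ->] := flattens_phim hf.
  by rewrite (comp_idr hf) (comp_idl hf).
- split=> [Ys | m] /=.
    split; first exact: flattens_ishom (flattens_counit Ys).
    apply: isiso_flattens (flattens_counit Ys) (flattens_counit_inv Ys) _ _;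
      by rewrite (comp_idl (hom_pid _)) ?(@flat1 C).
  apply: heq_flattens (flattens_sig_comp (flattens_counit _) (flattens_flatm m))
    (flattens_sig_comp (flattens_phim (hom_flatm m)) (flattens_counit _)) _.
  by rewrite (comp_idr (hom_flatm m)) (comp_idl (hom_flatm m)).
Qed.

Definition phi_mu_inv (X Y : pOb C) : SigMor C :=
  mkSig [:: tens X Y] [:: X; Y] idf muf (pid (tens X Y)).
Definition phi_eps_inv : SigMor C := mkSig [:: pzero C] [::] idf idf (pid (pzero C)).

Lemma flattens_phi_mu_inv X Y :
  flattens (phi_mu_inv X Y) [:: tens X Y] [:: X; Y] (swp (std 2) muf [:: X; Y]).
Proof.
have hT : hom (pid (tens X Y)) (push idf [:: tens X Y]) (push muf [:: X; Y]).
  by rewrite push_idf1; apply: hom_pid.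
apply: flattens_eq (flattens_mkSig hT _ jinj_muf) _ => //.
rewrite /recast swp_id // -/(flat [:: tens X Y]) flat1.
by rewrite (comp_idr (hom_pid _)) (comp_idr (hom_swp (Xs := [:: X; Y]) (@jinj_std 2) jinj_muf)).
Qed.

Lemma flattens_phi_eps_inv : flattens phi_eps_inv [:: pzero C] [::] (pid (pzero C)).
Proof.
have h0 : hom (pid (pzero C)) (push idf [:: pzero C]) (push idf [::]).
  by rewrite push_idf1 push0; apply: hom_pid.
apply: flattens_eq (flattens_mkSig h0 _ _) _ => //.
by rewrite /recast swp_id // swp0 push_idf1 !(comp_idl (hom_pid _)).
Qed.

Lemma Phi_mu_iso X Y : isiso (S := Sigma C) (phi_mu X Y).
Proof.
have hXY : jinj (size [:: X; Y]) muf := jinj_muf.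
apply: isiso_flattens (flattens_phi_mu X Y) (flattens_phi_mu_inv X Y) _ _.
  by rewrite swp_comp ?swp_id.
by rewrite swp_comp ?swp_id ?(@flat1 C).
Qed.

Lemma Phi_eps_iso : isiso (S := Sigma C) phi_eps.
Proof.
apply: isiso_flattens flattens_phi_eps flattens_phi_eps_inv _ _; rewrite (comp_idl (hom_pid _)).
  by rewrite flat0.
by rewrite (@flat1 C).
Qed.

Lemma tensE X Y : tens X Y = pplus (pact mu1 X) (pact mu2 Y).
Proof. exact: push2. Qed.

Lemma hom_pushm_muf f g :
  hom (pushm muf [:: f; g]) (tens (pdom f) (pdom g)) (tens (pcod f) (pcod g)).
Proof. by rewrite pushm2 !tensE; apply: hom_plus; try disj_tac; apply: hom_act. Qed.

Lemma Phi_mu_nat f g :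
  smheq (s := Sigma C) (sig_comp (phim (pushm muf [:: f; g])) (phi_mu (pdom f) (pdom g)))
    (sig_comp (phi_mu (pcod f) (pcod g)) (sig_tensm (phim f) (phim g))).
Proof.
have hf : hom f (pdom f) (pcod f) by []; have hg : hom g (pdom g) (pcod g) by [].
apply: heq_flattens (flattens_sig_comp (flattens_phi_mu _ _) (flattens_phim (hom_pushm_muf f g)))
  (flattens_sig_comp (flattens_sig_tensm (flattens_phim hf) (flattens_phim hg))
    (flattens_phi_mu _ _)) _.
rewrite !recast1 // pushm2 !swp2; do 2 interchange.
rewrite (act_comp_pid _ _ _ hf) (act_comp_pid _ _ _ hg).
by rewrite (act_pid_comp _ _ _ hf) (act_pid_comp _ _ _ hg).
Qed.

Lemma Phi_unitl X :
  smheq (s := Sigma C) (sig_id [:: X])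
    (sig_comp (phim (pactm inj1 mu2 (pid X)))
       (sig_comp (phi_mu (pzero C) X) (sig_tensm phi_eps (sig_id [:: X])))).
Proof.
have hl : hom (pactm inj1 mu2 (pid X)) (tens (pzero C) X) X.
  by have := hom_act inj1 mu2 (hom_pid X); rewrite act1 tensE act0 (ax_unitl_ob ax).
apply: heq_flattens (flattens_sig_id _)
  (flattens_sig_comp (flattens_sig_comp (flattens_sig_tensm flattens_phi_eps (flattens_sig_id _))
    (flattens_phi_mu _ _)) (flattens_phim hl)) _.
rewrite flat1 (recast1 _ _ (hom_pid X)) /recast swp0 swp1 swp2 !act_pid0 !(comp_idl (hom_pid _)).
rewrite !(ax_unitl_mor ax) !(act_pid_comp _ _ _ (hom_pid X)).
by rewrite (ax_act_id ax) act1.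
Qed.

Lemma Phi_unitr X :
  smheq (s := Sigma C) (sig_id [:: X])
    (sig_comp (phim (pactm inj1 mu1 (pid X)))
       (sig_comp (phi_mu X (pzero C)) (sig_tensm (sig_id [:: X]) phi_eps))).
Proof.
have hr : hom (pactm inj1 mu1 (pid X)) (tens X (pzero C)) X.
  by have := hom_act inj1 mu1 (hom_pid X); rewrite act1 tensE act0 (ax_unitr_ob ax).
have := flattens_sig_comp (flattens_sig_comp (flattens_sig_tensm (flattens_sig_id [:: X])
  flattens_phi_eps) (flattens_phi_mu X (pzero C))) (flattens_phim hr).
rewrite cats0 => hF; apply: heq_flattens (flattens_sig_id _) hF _.
rewrite flat1 (recast1 _ _ (hom_pid X)) /recast swp0 swp1 swp2 !act_pid0 !(comp_idl (hom_pid _)).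
rewrite !(ax_unitr_mor ax) !(act_pid_comp _ _ _ (hom_pid X)).
by rewrite (ax_act_id ax) act1.
Qed.

Lemma flattens_sig_beta1 (X Y : pOb C) : flattens (sig_beta [:: X] [:: Y]) [:: X; Y] [:: Y; X]
  (pplusm (pactm (canon 2 0) (canon 2 1) (pid Y)) (pactm (canon 2 1) (canon 2 0) (pid X))).
Proof.
rewrite /sig_beta /=.
set pb := fun a => if a < 1 then canon 2 (a + 1) else canon 2 (a - 1).
have hpb : jinj (size [:: Y; X]) pb by move=> [|[|a]] [|[|b]] x y //= _ _ e; apart_eq e.
have hc : jinj (size [:: X; Y]) (canon 2) := jinj_canon (n := 2).
have epb : push pb [:: Y; X] = push (canon 2) [:: X; Y].
  by rewrite !push2 /= (ax_comm_ob ax) //; disj_tac.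
have h : hom (pid (push (canon 2) [:: X; Y])) (push (canon 2) [:: X; Y]) (push pb [:: Y; X]).
  by rewrite epb; apply: hom_pid.
have hs := hom_swp (Xs := [:: Y; X]) (@jinj_std 2) hpb; rewrite epb in hs.
apply: flattens_eq (flattens_mkSig h hc hpb) _.
by rewrite /recast swp_id // (comp_idl (hom_pid _)) (comp_idr hs) swp2.
Qed.

Lemma Phi_sym X Y :
  smheq (s := Sigma C) (sig_comp (phim (swp (fam [:: mu2; mu1]) muf [:: X; Y])) (phi_mu X Y))
    (sig_comp (phi_mu Y X) (sig_beta [:: X] [:: Y])).
Proof.
have j21 : jinj (size [:: X; Y]) (fam [:: mu2; mu1]).
  by move=> [|[|a]] [|[|b]] x y //= _ _ e; apart_eq e.
have hb : hom (swp (fam [:: mu2; mu1]) muf [:: X; Y]) (tens X Y) (tens Y X).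
  have -> : tens Y X = push (fam [:: mu2; mu1]) [:: X; Y].
    by rewrite push2 tensE /= (ax_comm_ob ax) //; disj_tac.
  exact: hom_swp j21 jinj_muf.
apply: heq_flattens (flattens_sig_comp (flattens_phi_mu _ _) (flattens_phim hb))
  (flattens_sig_comp (flattens_sig_beta1 _ _) (flattens_phi_mu _ _)) _.
have jm : jinj (size [:: X; Y]) muf := jinj_muf.
rewrite swp_comp // !swp2 /=; interchange.
rewrite (act_pid_comp _ _ _ (hom_pid X)) (act_pid_comp _ _ _ (hom_pid Y)).
by rewrite (ax_comm_mor ax) //; disjm_tac.
Qed.

Section Assoc.
Variables X Y Z : pOb C.
Let A := fam [:: mu1; injM mu2 mu1; injM mu2 mu2].
Let B := fam [:: injM mu1 mu1; injM mu1 mu2; mu2].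

Lemma jinj_assoc_l : jinj (size [:: X; Y; Z]) B.
Proof. by move=> [|[|[|a]]] [|[|[|b]]] x y //= _ _ e; apart_eq e. Qed.

Lemma jinj_assoc_r : jinj (size [:: X; Y; Z]) A.
Proof. by move=> [|[|[|a]]] [|[|[|b]]] x y //= _ _ e; apart_eq e. Qed.

Lemma push_assoc_l : push B [:: X; Y; Z] = tens (tens X Y) Z.
Proof.
by rewrite push3 !tensE /= (ax_equiv_ob ax) ?act_mul ?(ax_assoc_ob ax) //; disj_tac.
Qed.

Lemma push_assoc_r : push A [:: X; Y; Z] = tens X (tens Y Z).
Proof. by rewrite push3 !tensE /= (ax_equiv_ob ax) ?act_mul //; disj_tac. Qed.

Lemma hom_assoc : hom (swp A B [:: X; Y; Z]) (tens (tens X Y) Z) (tens X (tens Y Z)).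
Proof. by rewrite -push_assoc_l -push_assoc_r; apply: hom_swp jinj_assoc_r jinj_assoc_l. Qed.

Lemma flattens_assoc_l :
  flattens (sig_comp (phim (swp A B [:: X; Y; Z]))
              (sig_comp (phi_mu (tens X Y) Z) (sig_tensm (phi_mu X Y) (sig_id [:: Z]))))
    [:: X; Y; Z] [:: tens X (tens Y Z)] (swp A (std 3) [:: X; Y; Z]).
Proof.
apply: flattens_eq (flattens_sig_comp (flattens_sig_comp (flattens_sig_tensm (flattens_phi_mu X Y)
  (flattens_sig_id [:: Z])) (flattens_phi_mu (tens X Y) Z)) (flattens_phim hom_assoc)) _.
have jm : jinj (size [:: X; Y]) muf := jinj_muf.
have j3 : jinj (size [:: X; Y]) (std 3) := jinj_leq (isT : 2 <= 3) (@jinj_std 3).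
rewrite flat1 (recast1 _ _ (hom_pid Z)) /recast swp_comp // swp1 !swp2 !tensE !swp3 /=.
rewrite !act_pid_sum ?inj1M; try disj_tac.
rewrite act_pid_comp2; try disj_tac.
rewrite !(ax_assoc_mor ax); try disjm_tac.
by repeat interchange; rewrite !(act_pid_comp _ _ _ (hom_pid _)).
Qed.

Lemma flattens_assoc_r :
  flattens (sig_comp (phi_mu X (tens Y Z))
              (sig_comp (sig_tensm (sig_id [:: X]) (phi_mu Y Z)) (sig_id [:: X; Y; Z])))
    [:: X; Y; Z] [:: tens X (tens Y Z)] (swp A (std 3) [:: X; Y; Z]).
Proof.
apply: flattens_eq (flattens_sig_comp (flattens_sig_comp_id
  (flattens_sig_tensm (flattens_sig_id [:: X]) (flattens_phi_mu Y Z)))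
  (flattens_phi_mu X (tens Y Z))) _.
have jm : jinj (size [:: Y; Z]) muf := jinj_muf.
have j3 : jinj (size [:: Y; Z]) (shiftf 1 (std 3)) := jinj_shiftf (n := 1) (m := 2) (@jinj_std 3).
rewrite flat1 (recast1 _ _ (hom_pid X)) /recast swp_comp // swp1 !swp2 !tensE swp3 /=.
rewrite !act_pid_sum ?inj1M; try disj_tac.
by repeat interchange; rewrite !(act_pid_comp _ _ _ (hom_pid _)).
Qed.

End Assoc.

Lemma Phi_assoc X Y Z :
  smheq (s := Sigma C)
    (sig_comp (phim (swp (fam [:: mu1; injM mu2 mu1; injM mu2 mu2])
                         (fam [:: injM mu1 mu1; injM mu1 mu2; mu2]) [:: X; Y; Z]))
       (sig_comp (phi_mu (tens X Y) Z) (sig_tensm (phi_mu X Y) (sig_id [:: Z]))))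
    (sig_comp (phi_mu X (tens Y Z))
       (sig_comp (sig_tensm (sig_id [:: X]) (phi_mu Y Z)) (sig_id [:: X; Y; Z]))).
Proof. exact: heq_flattens (flattens_assoc_l X Y Z) (flattens_assoc_r X Y Z) erefl. Qed.

Lemma Phi_strong_sym_monoidal : strong_sym_monoidal Phi.
Proof.
split; rewrite /=.
- exact: Phi_functor.
- by move=> X Y; apply: flattens_ishom (flattens_phi_mu X Y).
- exact: Phi_mu_iso.
- exact: flattens_ishom flattens_phi_eps.
- exact: Phi_eps_iso.
- exact: Phi_mu_nat.
- exact: Phi_assoc.
- exact: Phi_unitl.
- exact: Phi_unitr.
- exact: Phi_sym.
Qed.

End OverC.

Lemma Phi_natural (C D : PCat) (F : PMor C D) :
  smf_eq (smf_comp (Sigma_fun F) (Phi C)) (smf_comp (Phi D) (mu_star_fun Hmu F)).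
Proof.
have fF := Fax F.
have Fo_tens X Y : Fo F (tens X Y) = tens (Fo F X) (Fo F Y).
  by rewrite /tens Fo_push //; exact: jinj_muf.
split=> [X | f | X Y |] //=.
- rewrite /phim (SigmaF_mkSig F (hom_phim f)) //= -(fax_dom fF) -(fax_cod fF).
  exact: rst_refl.
- rewrite /phi_mu (SigmaF_mkSig F (hom_phi_mu X Y) jinj_muf) //= (fax_id fF) Fo_tens -/(phi_mu _ _).
  apply: heq_flattens (flattens_sig_comp_id (flattens_phi_mu _ _))
    (flattens_sig_comp (flattens_phi_mu _ _) (flattens_phim (hom_pid _))) _.
  by rewrite (comp_idl (hom_swp (Xs := [:: Fo F X; Fo F Y]) jinj_muf (@jinj_std 2))).
- rewrite /phi_eps (SigmaF_mkSig F (hom_phi_eps C)) //= (fax_id fF) (fax_zero fF) -/(phi_eps D).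
  apply: heq_flattens (flattens_sig_comp_id (flattens_phi_eps D))
    (flattens_sig_comp (flattens_phi_eps D) (flattens_phim (hom_pid _))) _.
  by rewrite (comp_idl (hom_pid _)).
Qed.

End Phi.

Theorem proposition2p10 (mu : 'I_2 * nat -> nat) (Hmu : injective mu) :
  exists Phi : forall C : PCat, SMFun (mu_star Hmu C) (Sigma C),
    (forall C : PCat, strong_sym_monoidal (Phi C) /\ cat_equivalence (Phi C)) /\
    (forall (C D : PCat) (F : PMor C D),
       smf_eq (smf_comp (Sigma_fun F) (Phi C))
              (smf_comp (Phi D) (mu_star_fun Hmu F))).
Proof.
exists (Phi Hmu); split; last exact: Phi_natural.
by move=> C; split; [exact: Phi_strong_sym_monoidal | exact: Phi_equiv].
Qed.
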